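(* Let $d>e\ge1$. The set $S_{d,e}\subseteq\mathbb{C}^{d+e-2}$ is compact.
   Context: For a tuple $(a_{d-1},\dots,a_1,b_{e-1},\dots,b_1)\in\mathbb{C}^{d+e-2}$ consider the correspondence $C=\{(x,y)\in\mathbb{C}^2: y^e+b_{e-1}y^{e-1}+\cdots+b_1y=x^d+a_{d-1}x^{d-1}+\cdots+a_1x\}$. Writing it as $g(y)=f(x)$, a critical point is $a\in\mathbb{C}$ with $f'(a)=0$ or $g'(b)=0$ for some $b$ with $g(b)=f(a)$. A path is a sequence $(x_n)_{n\ge0}$ with $(x_n,x_{n+1})\in C$ for all $n$, starting at $x_0$; it is bounded if $\sup_n|x_n|<\infty$. $S_{d,e}$ is the set of tuples for which every critical point of $C$ is the starting point of at least one bounded path. *)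

From Stdlib Require Import Reals List Lia.
Open Scope R_scope.

Definition C : Type := (R * R)%type.
Definition C0 : C := (0, 0).
Definition C1 : C := (1, 0).
Definition Cadd (z w : C) : C := (fst z + fst w, snd z + snd w).
Definition Cmul (z w : C) : C :=
  (fst z * fst w - snd z * snd w, fst z * snd w + snd z * fst w).
Definition CofR (r : R) : C := (r, 0).
Fixpoint Cpow (z : C) (n : nat) : C :=
  match n with O => C1 | S k => Cmul z (Cpow z k) end.
Definition Cnorm (z : C) : R := sqrt (fst z * fst z + snd z * snd z).
Definition Cdist (z w : C) : R := Cnorm (fst z - fst w, snd z - snd w).

(* ---------- The monic polynomials without constant term ----------
   For a coefficient function c (c i = coefficient of X^i, used for 1 <= i < n),
   poly n c x = x^n + c (n-1) x^(n-1) + ... + c 1 x. *)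
Definition poly (n : nat) (c : nat -> C) (x : C) : C :=
  fold_right Cadd (Cpow x n)
    (map (fun i => Cmul (c i) (Cpow x i)) (seq 1 (n - 1))).

Definition dpoly (n : nat) (c : nat -> C) (x : C) : C :=
  fold_right Cadd (Cmul (CofR (INR n)) (Cpow x (n - 1)))
    (map (fun i => Cmul (Cmul (CofR (INR i)) (c i)) (Cpow x (i - 1))) (seq 1 (n - 1))).

(* ---------- Points of C^(d+e-2) ----------
   A point p of C^(d+e-2) is represented by p : nat -> C, of which only the
   coordinates p 0, ..., p (d+e-3) are meaningful; the tuple is
   (a_{d-1},...,a_1,b_{e-1},...,b_1), i.e. p i = a_{d-1-i} for i < d-1 and
   p (d-1+j) = b_{e-1-j} for j < e-1. *)
Definition coef_a (d : nat) (p : nat -> C) (i : nat) : C := p (d - 1 - i)%nat.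
Definition coef_b (d e : nat) (p : nat -> C) (i : nat) : C := p (d - 1 + (e - 1 - i))%nat.

Definition fpol (d : nat) (p : nat -> C) : C -> C := poly d (coef_a d p).
Definition gpol (d e : nat) (p : nat -> C) : C -> C := poly e (coef_b d e p).
Definition dfpol (d : nat) (p : nat -> C) : C -> C := dpoly d (coef_a d p).
Definition dgpol (d e : nat) (p : nat -> C) : C -> C := dpoly e (coef_b d e p).

Definition in_corr (d e : nat) (p : nat -> C) (x y : C) : Prop :=
  gpol d e p y = fpol d p x.

Definition critical_point (d e : nat) (p : nat -> C) (a : C) : Prop :=
  dfpol d p a = C0 \/ exists b : C, dgpol d e p b = C0 /\ gpol d e p b = fpol d p a.

Definition is_path (d e : nat) (p : nat -> C) (x0 : C) (x : nat -> C) : Prop :=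
  x 0%nat = x0 /\ forall n : nat, in_corr d e p (x n) (x (S n)).

Definition bounded_seq (x : nat -> C) : Prop :=
  exists M : R, forall n : nat, Cnorm (x n) <= M.

Definition S_de (d e : nat) (p : nat -> C) : Prop :=
  forall a : C, critical_point d e p a ->
    exists x : nat -> C, is_path d e p a x /\ bounded_seq x.

(* ---------- Topology of C^n ----------
   sup distance on the first n coordinates (it induces the standard topology). *)
Definition dist_n (n : nat) (p q : nat -> C) (r : R) : Prop :=
  forall i : nat, (i < n)%nat -> Cdist (p i) (q i) < r.

Definition open_n (n : nat) (U : (nat -> C) -> Prop) : Prop :=
  forall p, U p -> exists r : R, 0 < r /\ forall q, dist_n n p q r -> U q.

Definition compact_n (n : nat) (K : (nat -> C) -> Prop) : Prop :=
  forall (I : Type) (U : I -> (nat -> C) -> Prop),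
    (forall i, open_n n (U i)) ->
    (forall p, K p -> exists i, U i p) ->
    exists l : list I, forall p, K p -> exists i, In i l /\ U i p.

(* By Heine-Borel it suffices that S_{d,e} is bounded and closed.

   Closed: outside a disc whose radius depends only on a bound for the coefficients, every step of a
   path doubles |x|, so bounded paths stay in that disc. As every point has finitely many successors,
   a critical point [a] of [q] without bounded path (Koenig) already has no path of some finite
   length [N] inside the disc; by continuity of the roots of [y |-> g(y) - f(a)] this persists for
   parameters near [q] and points near [a], and critical points move continuously with the parameters.

   Bounded: let [s], [t] be the dyadic scales of the coefficients of [f] and [g]. A monic polynomial
   vanishing at 0 all of whose critical points are roots is [X^m]; by compactness of the normalised
   polynomials, [f] has a critical value of size ~ [s^d] and [g] one of size ~ [t^e]. When [s] is
   large, the successors of the critical point of [f] land where paths escape; when [t] is large, so do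
   the successors of a preimage under [f] of the critical value of [g]. Either way some critical point
   has no bounded path, so [s] and [t] are bounded on S_{d,e}. *)

From Stdlib Require Import Reals List Arith Lia Lra Psatz Classical ClassicalEpsilon.
From Pilot Require Import Defs.
From mathcomp Require all_boot all_order all_algebra all_classical all_reals all_analysis.
From mathcomp Require Rstruct Rstruct_topology finmap.
From mathcomp.real_closed Require complex.
Open Scope R_scope.

Definition Csub (z w : C) : C := (fst z - fst w, snd z - snd w).
Definition Copp (z : C) : C := (- fst z, - snd z).

Ltac Cring :=
  repeat match goal with z : C |- _ => let a := fresh "a" in let b := fresh "b" in destruct z as [a b] end;
  unfold Cadd, Cmul, Csub, Copp, CofR, C0, C1 in *; simpl; f_equal; ring.

Lemma C1_neq0 : C1 <> C0.
Proof. unfold C1, C0; intro h; injection h; lra. Qed.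

Lemma Cmul_1_l z : Cmul C1 z = z.
Proof. Cring. Qed.

Lemma Csub_0_r z : Csub z C0 = z.
Proof. Cring. Qed.

Lemma Csub_eq0 z w : Csub z w = C0 -> z = w.
Proof. destruct z, w; unfold Csub, C0; simpl; intro h; injection h; intros; f_equal; lra. Qed.

Lemma Cnorm_ge0 z : 0 <= Cnorm z.
Proof. apply sqrt_pos. Qed.

Lemma Cnorm_sq z : Cnorm z * Cnorm z = fst z * fst z + snd z * snd z.
Proof. unfold Cnorm; rewrite sqrt_sqrt; nra. Qed.

Lemma Cnorm_mul z w : Cnorm (Cmul z w) = Cnorm z * Cnorm w.
Proof. unfold Cnorm, Cmul; simpl. rewrite <- sqrt_mult_alt by nra. f_equal; ring. Qed.

Lemma Cnorm_le_iff z r : 0 <= r -> Cnorm z <= r <-> fst z * fst z + snd z * snd z <= r * r.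
Proof. intro hr. pose proof (Cnorm_ge0 z). rewrite <- Cnorm_sq. split; intro; nra. Qed.

Lemma Cnorm_triang z w : Cnorm (Cadd z w) <= Cnorm z + Cnorm w.
Proof.
  pose proof (Cnorm_ge0 z); pose proof (Cnorm_ge0 w); pose proof (Cnorm_sq z); pose proof (Cnorm_sq w).
  apply Cnorm_le_iff; [lra|].
  destruct z as [a b], w as [c d]; unfold Cadd; cbn [fst snd] in *.
  set (X := Cnorm (a, b) * Cnorm (c, d)).
  assert (hX : 0 <= X) by (apply Rmult_le_pos; lra).
  assert (hXX : X * X = (a * a + b * b) * (c * c + d * d)) by (unfold X; nra).
  (* Cauchy-Schwarz: (ac+bd)^2 <= (a^2+b^2)(c^2+d^2) *)
  assert (a * c + b * d <= X).
  { destruct (Rle_dec (a * c + b * d) 0); [lra|].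
    pose proof (Rle_0_sqr (a * d - b * c)); unfold Rsqr in *. nra. }
  unfold X in *. nra.
Qed.

Lemma Cnorm_triang_inv z w : Cnorm z - Cnorm w <= Cnorm (Csub z w).
Proof.
  pose proof (Cnorm_triang (Csub z w) w) as h.
  replace (Cadd (Csub z w) w) with z in h by Cring. lra.
Qed.

Lemma Cnorm_sub_comm z w : Cnorm (Csub z w) = Cnorm (Csub w z).
Proof. unfold Cnorm, Csub; simpl; f_equal; ring. Qed.

Lemma Cnorm_opp z : Cnorm (Copp z) = Cnorm z.
Proof. unfold Cnorm, Copp; simpl; f_equal; ring. Qed.

Lemma Cnorm_CofR r : Cnorm (CofR r) = Rabs r.
Proof. unfold Cnorm, CofR; simpl. replace (r * r + 0 * 0) with (r * r) by ring. apply sqrt_Rsqr_abs. Qed.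

Lemma Cnorm_C0 : Cnorm C0 = 0.
Proof. unfold Cnorm, C0; simpl. replace (0 * 0 + 0 * 0) with 0 by ring. apply sqrt_0. Qed.

Lemma Cnorm_C1 : Cnorm C1 = 1.
Proof. unfold Cnorm, C1; simpl. replace (1 * 1 + 0 * 0) with 1 by ring. apply sqrt_1. Qed.

Lemma Cnorm_pow z k : Cnorm (Cpow z k) = Cnorm z ^ k.
Proof. induction k; simpl. apply Cnorm_C1. rewrite Cnorm_mul, IHk; ring. Qed.

Lemma Cnorm_eq0 z : Cnorm z = 0 -> z = C0.
Proof.
  intro h. pose proof (Cnorm_sq z) as hsq. rewrite h in hsq.
  destruct z as [a b]; simpl in *; unfold C0; f_equal; nra.
Qed.

Lemma Cnorm_pos z : z <> C0 -> 0 < Cnorm z.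
Proof.
  intro hz. destruct (Cnorm_ge0 z) as [h|h]; auto.
  exfalso; apply hz, Cnorm_eq0; auto.
Qed.

Lemma Cnorm_sub_diag z : Cnorm (Csub z z) = 0.
Proof. replace (Csub z z) with C0 by Cring. apply Cnorm_C0. Qed.

Lemma Cnorm_sub_eq0 z w : Cnorm (Csub z w) = 0 -> z = w.
Proof. intro h. apply Csub_eq0, Cnorm_eq0, h. Qed.

Lemma Cnorm_le_abs z : Cnorm z <= Rabs (fst z) + Rabs (snd z).
Proof.
  destruct z as [a b]; simpl. pose proof (Rabs_pos a); pose proof (Rabs_pos b).
  apply Cnorm_le_iff; [lra|]; simpl.
  assert (Rabs a * Rabs a = a * a) by (rewrite <- Rabs_mult; apply Rabs_right; nra).
  assert (Rabs b * Rabs b = b * b) by (rewrite <- Rabs_mult; apply Rabs_right; nra).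
  nra.
Qed.

Lemma Rabs_fst_le z : Rabs (fst z) <= Cnorm z.
Proof.
  pose proof (Cnorm_ge0 z); pose proof (Cnorm_sq z).
  rewrite <- (Rabs_right (Cnorm z)) by lra. apply Rsqr_le_abs_0. unfold Rsqr; nra.
Qed.

Lemma Rabs_snd_le z : Rabs (snd z) <= Cnorm z.
Proof.
  pose proof (Cnorm_ge0 z); pose proof (Cnorm_sq z).
  rewrite <- (Rabs_right (Cnorm z)) by lra. apply Rsqr_le_abs_0. unfold Rsqr; nra.
Qed.

Lemma Cnorm_Cpow_sub_le x x' r k : 1 <= r -> Cnorm x <= r -> Cnorm x' <= r ->
  Cnorm (Csub (Cpow x k) (Cpow x' k)) <= INR k * r ^ k * Cnorm (Csub x x').
Proof.
  intros hr hx hx'. induction k as [|k IH].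
  - simpl. rewrite Cnorm_sub_diag. lra.
  - simpl Cpow.
    replace (Csub (Cmul x (Cpow x k)) (Cmul x' (Cpow x' k))) with
      (Cadd (Cmul x (Csub (Cpow x k) (Cpow x' k))) (Cmul (Csub x x') (Cpow x' k))) by Cring.
    eapply Rle_trans; [apply Cnorm_triang|]. rewrite !Cnorm_mul, Cnorm_pow, S_INR. simpl pow.
    pose proof (Cnorm_ge0 x'); pose proof (Cnorm_ge0 (Csub x x')).
    pose proof (Cnorm_ge0 (Csub (Cpow x k) (Cpow x' k))).
    assert (Cnorm x' ^ k <= r ^ k) by (apply pow_incr; lra).
    assert (1 <= r ^ k) by (apply pow_R1_Rle; lra).
    pose proof (pos_INR k).
    assert (Cnorm x * Cnorm (Csub (Cpow x k) (Cpow x' k)) <= r * (INR k * r ^ k * Cnorm (Csub x x'))).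
    { apply Rmult_le_compat; auto using Cnorm_ge0. }
    assert (Cnorm (Csub x x') * Cnorm x' ^ k <= Cnorm (Csub x x') * (r * r ^ k)).
    { apply Rmult_le_compat_l; nra. }
    nra.
Qed.

Fixpoint Csum (k : nat) (t : nat -> C) : C :=
  match k with O => C0 | S k => Cadd (Csum k t) (t k) end.

Lemma Csum_ext k t t' : (forall i, (i < k)%nat -> t i = t' i) -> Csum k t = Csum k t'.
Proof. induction k; intros h; simpl; auto. rewrite IHk, h; auto; intros; apply h; lia. Qed.

Lemma Csum_shift k t : Csum (S k) t = Cadd (t O) (Csum k (fun i => t (S i))).
Proof. induction k; simpl in *. Cring. rewrite IHk. Cring. Qed.

Lemma Csub_Csum k t t' : Csub (Csum k t) (Csum k t') = Csum k (fun i => Csub (t i) (t' i)).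
Proof. induction k; simpl. Cring. rewrite <- IHk. Cring. Qed.

Lemma Cmul_Csum k t w : Cmul w (Csum k t) = Csum k (fun i => Cmul w (t i)).
Proof. induction k; simpl. Cring. rewrite <- IHk. Cring. Qed.

Lemma Cnorm_Csum_le k t B : (forall i, (i < k)%nat -> Cnorm (t i) <= B) ->
  Cnorm (Csum k t) <= INR k * B.
Proof.
  induction k; intros h; simpl Csum. rewrite Cnorm_C0; simpl; lra.
  eapply Rle_trans; [apply Cnorm_triang|]. rewrite S_INR.
  assert (Cnorm (Csum k t) <= INR k * B) by (apply IHk; intros; apply h; lia).
  pose proof (h k ltac:(lia)). lra.
Qed.

Lemma fold_right_map_seq (h : nat -> C) z a k :
  fold_right Cadd z (map h (seq a k)) = Cadd (Csum k (fun i => h (a + i)%nat)) z.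
Proof.
  revert a. induction k; intro a. simpl; Cring.
  cbn [seq map fold_right]. rewrite IHk, Csum_shift, Nat.add_0_r.
  rewrite (Csum_ext k (fun i => h (a + S i)%nat) (fun i => h (S a + i)%nat)) by (intros; f_equal; lia).
  Cring.
Qed.

Definition peval (m : nat) (c : nat -> C) (x : C) : C :=
  Csum (S m) (fun i => Cmul (c i) (Cpow x i)).

Definition monic_coef (n : nat) (c : nat -> C) (i : nat) : C :=
  if Nat.eqb i 0 then C0 else if Nat.eqb i n then C1 else c i.
Definition deriv_coef (n : nat) (c : nat -> C) (i : nat) : C :=
  if Nat.eqb (S i) n then CofR (INR n) else Cmul (CofR (INR (S i))) (c (S i)).

Lemma monic_coef_0 n c : monic_coef n c 0 = C0.
Proof. reflexivity. Qed.

Lemma monic_coef_lead n c : (1 <= n)%nat -> monic_coef n c n = C1.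
Proof. intro. unfold monic_coef. replace (Nat.eqb n 0) with false by (symmetry; apply Nat.eqb_neq; lia).
  rewrite Nat.eqb_refl; auto. Qed.

Lemma monic_coef_mid n c i : (1 <= i)%nat -> (i < n)%nat -> monic_coef n c i = c i.
Proof.
  intros. unfold monic_coef.
  replace (Nat.eqb i 0) with false by (symmetry; apply Nat.eqb_neq; lia).
  replace (Nat.eqb i n) with false by (symmetry; apply Nat.eqb_neq; lia). auto.
Qed.

Lemma deriv_coef_lead n c : (1 <= n)%nat -> deriv_coef n c (n - 1) = CofR (INR n).
Proof. intro. unfold deriv_coef. replace (S (n - 1)) with n by lia. rewrite Nat.eqb_refl; auto. Qed.

Lemma deriv_coef_mid n c i : (S i < n)%nat -> deriv_coef n c i = Cmul (CofR (INR (S i))) (c (S i)).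
Proof. intro. unfold deriv_coef. replace (Nat.eqb (S i) n) with false by (symmetry; apply Nat.eqb_neq; lia). auto. Qed.

Lemma poly_peval n c x : (1 <= n)%nat -> poly n c x = peval n (monic_coef n c) x.
Proof.
  intro hn. destruct n as [|m]; [lia|]. unfold poly, peval.
  rewrite fold_right_map_seq. replace (S m - 1)%nat with m by lia.
  change (Csum (S (S m)) ?T) with (Cadd (Csum (S m) T) (T (S m))). rewrite Csum_shift.
  rewrite (Csum_ext m (fun i => Cmul (monic_coef (S m) c (S i)) (Cpow x (S i)))
                      (fun i => Cmul (c (1 + i)%nat) (Cpow x (1 + i)))).
  2: intros i hi; rewrite monic_coef_mid by lia; reflexivity.
  rewrite monic_coef_0, monic_coef_lead by lia. Cring.
Qed.

Lemma dpoly_peval n c x : (1 <= n)%nat -> dpoly n c x = peval (n - 1) (deriv_coef n c) x.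
Proof.
  intro hn. destruct n as [|m]; [lia|]. unfold dpoly, peval.
  rewrite fold_right_map_seq. replace (S m - 1)%nat with m by lia.
  change (Csum (S m) ?T) with (Cadd (Csum m T) (T m)).
  rewrite (Csum_ext m (fun i => Cmul (deriv_coef (S m) c i) (Cpow x i))
                      (fun i => Cmul (Cmul (CofR (INR (1 + i))) (c (1 + i)%nat)) (Cpow x (1 + i - 1)))).
  2: intros i hi; rewrite deriv_coef_mid by lia; simpl; rewrite Nat.sub_0_r; reflexivity.
  unfold deriv_coef. rewrite Nat.eqb_refl. reflexivity.
Qed.

Lemma poly_ext n c c' x : (1 <= n)%nat -> (forall k, (1 <= k)%nat -> (k < n)%nat -> c k = c' k) ->
  poly n c x = poly n c' x.
Proof.
  intros hn h. rewrite !poly_peval by auto. apply Csum_ext. intros i hi.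
  unfold monic_coef. destruct (Nat.eqb_spec i 0), (Nat.eqb_spec i n); auto. rewrite h; auto; lia.
Qed.

Lemma dpoly_ext n c c' x : (1 <= n)%nat -> (forall k, (1 <= k)%nat -> (k < n)%nat -> c k = c' k) ->
  dpoly n c x = dpoly n c' x.
Proof.
  intros hn h. rewrite !dpoly_peval by auto. apply Csum_ext. intros i hi.
  unfold deriv_coef. destruct (Nat.eqb_spec (S i) n); auto. rewrite h; auto; lia.
Qed.

Lemma finite_bound (f : nat -> R) n : exists M, 1 <= M /\ forall i, (i < n)%nat -> f i <= M.
Proof.
  induction n as [|n [M [hM1 hM]]]. { exists 1; split; [lra | intros; lia]. }
  exists (Rmax M (f n)); split. { eapply Rle_trans; [exact hM1 | apply Rmax_l]. }
  intros i hi. destruct (Nat.eq_dec i n) as [->|]. apply Rmax_r.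
  eapply Rle_trans; [apply hM; lia | apply Rmax_l].
Qed.

Lemma finite_max_lt (f : nat -> R) n b : (forall i, (i < n)%nat -> f i < b) ->
  exists M, M < b /\ forall i, (i < n)%nat -> f i <= M.
Proof.
  induction n as [|n IH]; intros h. { exists (b - 1); split; [lra | intros; lia]. }
  destruct IH as [M [hM hM']]; [intros; apply h; lia|].
  exists (Rmax M (f n)); split. { unfold Rmax; destruct (Rle_dec M (f n)); auto; apply h; lia. }
  intros i hi. destruct (Nat.eq_dec i n) as [->|]. apply Rmax_r.
  eapply Rle_trans; [apply hM'; lia | apply Rmax_l].
Qed.

Lemma list_uniform_nat {A} (P : A -> nat -> Prop) (l : list A) :
  (forall a N N', (N <= N')%nat -> P a N -> P a N') ->
  (forall a, In a l -> exists N, P a N) -> exists N, forall a, In a l -> P a N.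
Proof.
  intros hmono. induction l as [|x l IH]; intros h. { exists O; intros a []. }
  destruct (h x (or_introl eq_refl)) as [N1 h1].
  destruct IH as [N2 h2]; [intros a ha; apply h; right; auto|].
  exists (Nat.max N1 N2). intros a [<-|ha]; [apply hmono with N1 | apply hmono with N2]; auto; lia.
Qed.

Lemma list_uniform_pos {A} (P : A -> R -> Prop) (l : list A) :
  (forall a x y, 0 < x -> x <= y -> P a y -> P a x) ->
  (forall a, In a l -> exists x, 0 < x /\ P a x) -> exists x, 0 < x /\ forall a, In a l -> P a x.
Proof.
  intros hmono. induction l as [|y l IH]; intros h. { exists 1; split; [lra | intros a []]. }
  destruct (h y (or_introl eq_refl)) as [x1 [hx1 h1]].
  destruct IH as [x2 [hx2 h2]]; [intros a ha; apply h; right; auto|].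
  assert (0 < Rmin x1 x2) by (apply Rmin_glb_lt; auto).
  exists (Rmin x1 x2); split; auto. intros a [<-|ha].
  - apply hmono with x1; auto. apply Rmin_l.
  - apply hmono with x2; auto. apply Rmin_r.
Qed.

Lemma dist_n_mono n q p a b : dist_n n q p a -> a <= b -> dist_n n q p b.
Proof. intros h hab i hi. specialize (h i hi). lra. Qed.

Lemma dist_n_bound n q p del M : dist_n n q p del -> (forall i, (i < n)%nat -> Cnorm (q i) <= M) ->
  forall i, (i < n)%nat -> Cnorm (p i) < M + del.
Proof.
  intros h hM i hi. specialize (h i hi). change (Cnorm (Csub (q i) (p i)) < del) in h.
  pose proof (hM i hi). pose proof (Cnorm_triang_inv (p i) (q i)) as htri.
  rewrite Cnorm_sub_comm in htri. lra.
Qed.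

Lemma pow_mul_le_pow x a b : 1 <= x -> (a < b)%nat -> x ^ a * x <= x ^ b.
Proof.
  intros hx hab. replace b with (a + S (b - S a))%nat by lia. rewrite pow_add.
  apply Rmult_le_compat_l; [apply pow_le; lra|]. simpl.
  rewrite <- (Rmult_1_r x) at 1. apply Rmult_le_compat_l; [lra | apply pow_R1_Rle; lra].
Qed.

Lemma monic_coef_close m c c' del : 0 <= del ->
  (forall k, (1 <= k)%nat -> (k < m)%nat -> Cnorm (Csub (c k) (c' k)) <= del) ->
  forall i, (i <= m)%nat -> Cnorm (Csub (monic_coef m c i) (monic_coef m c' i)) <= del.
Proof.
  intros hdel h i hi. unfold monic_coef.
  destruct (Nat.eqb_spec i 0) as [|hi0], (Nat.eqb_spec i m) as [|him]; try (rewrite Cnorm_sub_diag; lra).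
  apply h; lia.
Qed.

Lemma monic_coef_bound m c M : 1 <= M -> (forall k, (1 <= k)%nat -> (k < m)%nat -> Cnorm (c k) <= M) ->
  forall i, (i <= m)%nat -> Cnorm (monic_coef m c i) <= M.
Proof.
  intros hM h i hi. unfold monic_coef.
  destruct (Nat.eqb_spec i 0) as [|hi0]; [rewrite Cnorm_C0; lra|].
  destruct (Nat.eqb_spec i m) as [|him]; [rewrite Cnorm_C1; lra|]. apply h; lia.
Qed.

Lemma deriv_coef_close m c c' del : (1 <= m)%nat -> 0 <= del ->
  (forall i, (1 <= i)%nat -> (i < m)%nat -> Cnorm (Csub (c i) (c' i)) <= del) ->
  forall i, (i <= m - 1)%nat -> Cnorm (Csub (deriv_coef m c i) (deriv_coef m c' i)) <= INR m * del.
Proof.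
  intros hm hdel h i hi. unfold deriv_coef. destruct (Nat.eqb_spec (S i) m) as [|him].
  { rewrite Cnorm_sub_diag. pose proof (pos_INR m). nra. }
  replace (Csub (Cmul (CofR (INR (S i))) (c (S i))) (Cmul (CofR (INR (S i))) (c' (S i)))) with
    (Cmul (CofR (INR (S i))) (Csub (c (S i)) (c' (S i)))) by Cring.
  rewrite Cnorm_mul, Cnorm_CofR, Rabs_right by (apply Rle_ge, pos_INR).
  assert (INR (S i) <= INR m) by (apply le_INR; lia).
  assert (Cnorm (Csub (c (S i)) (c' (S i))) <= del) by (apply h; lia).
  pose proof (Cnorm_ge0 (Csub (c (S i)) (c' (S i)))). pose proof (pos_INR (S i)). nra.
Qed.

Definition lip_const (m : nat) (r M : R) : R := INR (S m) * r ^ m * (1 + M * INR m).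

Lemma lip_const_pos m r M : 1 <= r -> 0 <= M -> 0 < lip_const m r M.
Proof.
  intros hr hM. unfold lip_const.
  assert (0 < INR (S m)) by (apply lt_0_INR; lia). assert (0 < r ^ m) by (apply pow_lt; lra).
  assert (0 <= M * INR m) by (apply Rmult_le_pos; [lra | apply pos_INR]).
  repeat apply Rmult_lt_0_compat; lra.
Qed.

Lemma peval_lipschitz m c c' x x' r M delta : 1 <= r -> Cnorm x <= r -> Cnorm x' <= r -> 0 <= M ->
  (forall i, (i <= m)%nat -> Cnorm (Csub (c i) (c' i)) <= delta) ->
  (forall i, (i <= m)%nat -> Cnorm (c' i) <= M) ->
  Cnorm (Csub x x') <= delta ->
  Cnorm (Csub (peval m c x) (peval m c' x')) <= lip_const m r M * delta.
Proof.
  intros hr hx hx' hM hd hc' hxx. unfold peval, lip_const. rewrite Csub_Csum.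
  replace (INR (S m) * r ^ m * (1 + M * INR m) * delta) with (INR (S m) * (r ^ m * (1 + M * INR m) * delta)) by ring.
  apply Cnorm_Csum_le. intros i hi.
  replace (Csub (Cmul (c i) (Cpow x i)) (Cmul (c' i) (Cpow x' i))) with
    (Cadd (Cmul (Csub (c i) (c' i)) (Cpow x i)) (Cmul (c' i) (Csub (Cpow x i) (Cpow x' i)))) by Cring.
  eapply Rle_trans; [apply Cnorm_triang|]. rewrite !Cnorm_mul, Cnorm_pow.
  assert (him : (i <= m)%nat) by lia.
  pose proof (hd i him); pose proof (hc' i him); pose proof (Cnorm_Cpow_sub_le x x' r i hr hx hx').
  pose proof (Cnorm_ge0 x); pose proof (Cnorm_ge0 (c' i)); pose proof (Cnorm_ge0 (Csub (c i) (c' i))).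
  assert (hri : r ^ i <= r ^ m) by (apply Rle_pow; auto).
  assert (Cnorm x ^ i <= r ^ m) by (eapply Rle_trans; [apply pow_incr|]; eauto; lra).
  assert (INR i <= INR m) by (apply le_INR; lia).
  pose proof (pos_INR i). assert (1 <= r ^ i) by (apply pow_R1_Rle; lra).
  assert (0 <= delta) by (eapply Rle_trans; [apply Cnorm_ge0 | eauto]).
  assert (Cnorm (Csub (c i) (c' i)) * Cnorm x ^ i <= delta * r ^ m).
  { apply Rmult_le_compat; auto. apply pow_le, Cnorm_ge0. }
  assert (Cnorm (c' i) * Cnorm (Csub (Cpow x i) (Cpow x' i)) <= M * (INR m * r ^ m * delta)).
  { apply Rmult_le_compat; auto using Cnorm_ge0. eapply Rle_trans; [eassumption|].
    apply Rmult_le_compat; [nra | apply Cnorm_ge0 | apply Rmult_le_compat; lra | auto]. }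
  nra.
Qed.

Lemma peval_uniform_cont m r M eps : 0 <= r -> 0 <= M -> 0 < eps ->
  exists del, 0 < del /\ forall c c' x x', Cnorm x' <= r -> Cnorm (Csub x x') <= del ->
    (forall i, (i <= m)%nat -> Cnorm (Csub (c i) (c' i)) <= del) ->
    (forall i, (i <= m)%nat -> Cnorm (c' i) <= M) ->
    Cnorm (Csub (peval m c x) (peval m c' x')) < eps.
Proof.
  intros hr hM heps. set (K := lip_const m (r + 1) M).
  assert (hK : 0 < K) by (apply lip_const_pos; lra).
  exists (Rmin 1 (eps / (2 * K))). split.
  - apply Rmin_glb_lt; [lra | apply Rdiv_lt_0_compat; lra].
  - intros c c' x x' hx' hxx hc hc'.
    assert (hdel : Rmin 1 (eps / (2 * K)) <= eps / (2 * K)) by apply Rmin_r.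
    assert (Rmin 1 (eps / (2 * K)) <= 1) by apply Rmin_l.
    assert (Cnorm x <= r + 1) by (pose proof (Cnorm_triang_inv x x'); lra).
    eapply Rle_lt_trans; [apply (peval_lipschitz m c c' x x' (r + 1) M); auto; lra|].
    apply Rle_lt_trans with (K * (eps / (2 * K))); [apply Rmult_le_compat_l; lra|].
    replace (K * (eps / (2 * K))) with (eps / 2) by (field; lra). lra.
Qed.

(* The bounds [Cnorm (c k) <= s ^ (n - k)] say that [poly n c] lives at scale [s]:
   they are invariant under [x |-> s x] together with [c k |-> s ^ (n - k) c k]. *)
Definition scale_le (n : nat) (c : nat -> C) (s : R) : Prop :=
  forall k, (1 <= k)%nat -> (k < n)%nat -> Cnorm (c k) <= s ^ (n - k).

Lemma poly_norm_lower n c s x : (1 <= n)%nat -> 1 <= s -> scale_le n c s ->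
  2 * INR n * s <= Cnorm x -> Cnorm x ^ n / 2 <= Cnorm (poly n c x).
Proof.
  intros hn hs hc hx. rewrite poly_peval by auto. unfold peval.
  change (Csum (S n) ?T) with (Cadd (Csum n T) (T n)). cbv beta.
  rewrite monic_coef_lead, Cmul_1_l by auto.
  set (low := Csum n (fun i => Cmul (monic_coef n c i) (Cpow x i))).
  pose proof (Cnorm_triang_inv (Cpow x n) (Copp low)) as htri.
  replace (Csub (Cpow x n) (Copp low)) with (Cadd low (Cpow x n)) in htri by Cring.
  rewrite Cnorm_opp, Cnorm_pow in htri.
  assert (h1 : 1 <= INR n) by (apply (le_INR 1); lia).
  assert (hlow : Cnorm low <= INR n * (Cnorm x ^ n / (2 * INR n))).
  { apply Cnorm_Csum_le. intros i hi. rewrite Cnorm_mul, Cnorm_pow. destruct i as [|i].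
    - rewrite monic_coef_0, Cnorm_C0, Rmult_0_l.
      apply Rmult_le_pos; [apply pow_le, Cnorm_ge0 | apply Rlt_le, Rinv_0_lt_compat; lra].
    - rewrite monic_coef_mid by lia.
      (* each lower term is at most |x|^n / (2n), since |x| >= 2 n s *)
      set (j := (n - S i)%nat).
      assert (hj : (1 <= j)%nat) by (unfold j; lia).
      apply Rle_trans with (s ^ j * Cnorm x ^ S i).
      { apply Rmult_le_compat_r; [apply pow_le, Cnorm_ge0 | apply hc; lia]. }
      replace (Cnorm x ^ n) with (Cnorm x ^ j * Cnorm x ^ S i) by (rewrite <- pow_add; f_equal; unfold j; lia).
      assert (h2 : 2 * INR n <= (2 * INR n) ^ j).
      { destruct j; [lia|]. simpl. rewrite <- (Rmult_1_r (2 * INR n)) at 1.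
        apply Rmult_le_compat_l; [lra | apply pow_R1_Rle; lra]. }
      assert (h3 : (2 * INR n * s) ^ j <= Cnorm x ^ j) by (apply pow_incr; split; [nra | lra]).
      rewrite Rpow_mult_distr in h3.
      assert (0 <= Cnorm x ^ S i) by (apply pow_le, Cnorm_ge0).
      assert (0 <= s ^ j) by (apply pow_le; lra).
      apply Rmult_le_reg_r with (2 * INR n); [lra|].
      replace (Cnorm x ^ j * Cnorm x ^ S i / (2 * INR n) * (2 * INR n)) with (Cnorm x ^ j * Cnorm x ^ S i) by (field; lra).
      assert (2 * INR n * s ^ j <= (2 * INR n) ^ j * s ^ j) by (apply Rmult_le_compat_r; lra).
      nra. }
  replace (INR n * (Cnorm x ^ n / (2 * INR n))) with (Cnorm x ^ n / 2) in hlow by (field; lra).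
  lra.
Qed.

Lemma poly_norm_upper n c t y : (1 <= n)%nat -> 1 <= t -> scale_le n c t ->
  Cnorm (poly n c y) <= INR (S n) * Rmax (Cnorm y) t ^ n.
Proof.
  intros hn ht hc. rewrite poly_peval by auto. apply Cnorm_Csum_le. intros i hi.
  rewrite Cnorm_mul, Cnorm_pow. set (u := Rmax (Cnorm y) t).
  assert (Cnorm y <= u) by apply Rmax_l. assert (t <= u) by apply Rmax_r.
  pose proof (Cnorm_ge0 y).
  assert (Cnorm y ^ i <= u ^ i) by (apply pow_incr; lra).
  assert (0 <= Cnorm y ^ i) by (apply pow_le; lra).
  destruct i as [|i].
  - rewrite monic_coef_0, Cnorm_C0, Rmult_0_l. apply pow_le; lra.
  - destruct (Nat.eq_dec (S i) n) as [<-|].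
    + rewrite monic_coef_lead, Cnorm_C1 by lia. lra.
    + rewrite monic_coef_mid by lia.
      apply Rle_trans with (t ^ (n - S i) * u ^ S i).
      { apply Rmult_le_compat; auto using Cnorm_ge0. apply hc; lia. }
      replace (u ^ n) with (u ^ (n - S i) * u ^ S i) by (rewrite <- pow_add; f_equal; lia).
      apply Rmult_le_compat_r; [apply pow_le; lra | apply pow_incr; lra].
Qed.

Lemma poly_norm_upper_small n c t y : (1 <= n)%nat -> 1 <= t -> scale_le n c t ->
  Cnorm y <= t -> Cnorm (poly n c y) <= INR (S n) * (Cnorm y * t ^ (n - 1)).
Proof.
  intros hn ht hc hy. rewrite poly_peval by auto. apply Cnorm_Csum_le. intros i hi.
  rewrite Cnorm_mul, Cnorm_pow. pose proof (Cnorm_ge0 y).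
  assert (0 <= t ^ (n - 1)) by (apply pow_le; lra).
  destruct i as [|i].
  - rewrite monic_coef_0, Cnorm_C0, Rmult_0_l. nra.
  - assert (Cnorm y ^ S i <= Cnorm y * t ^ i) by (simpl; apply Rmult_le_compat_l; auto; apply pow_incr; lra).
    assert (0 <= t ^ i) by (apply pow_le; lra).
    destruct (Nat.eq_dec (S i) n) as [<-|].
    + rewrite monic_coef_lead, Cnorm_C1 by lia. replace (S i - 1)%nat with i by lia. lra.
    + rewrite monic_coef_mid by lia.
      apply Rle_trans with (t ^ (n - S i) * (Cnorm y * t ^ i)).
      { apply Rmult_le_compat; auto using Cnorm_ge0. apply pow_le; lra. apply hc; lia. }
      replace (n - 1)%nat with ((n - S i) + i)%nat by lia. rewrite pow_add.
      assert (0 <= t ^ (n - S i)) by (apply pow_le; lra). nra.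
Qed.

Lemma Cpow_scale (sg : R) z i : Cpow (Cmul (CofR sg) z) i = Cmul (CofR (sg ^ i)) (Cpow z i).
Proof. induction i; simpl. Cring. rewrite IHi. Cring. Qed.

Definition rescale (n : nat) (c : nat -> C) (sg : R) (k : nat) : C :=
  Cmul (CofR (/ sg ^ (n - k))) (c k).

Lemma Cnorm_rescale n c sg k : 0 < sg -> Cnorm (rescale n c sg k) = Cnorm (c k) / sg ^ (n - k).
Proof.
  intro hs. unfold rescale. rewrite Cnorm_mul, Cnorm_CofR, Rabs_right.
  unfold Rdiv; ring. apply Rle_ge, Rlt_le, Rinv_0_lt_compat, pow_lt; auto.
Qed.

Lemma poly_rescale n c sg z : (1 <= n)%nat -> 0 < sg ->
  poly n c (Cmul (CofR sg) z) = Cmul (CofR (sg ^ n)) (poly n (rescale n c sg) z).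
Proof.
  intros hn hs. rewrite !poly_peval by auto. unfold peval. rewrite Cmul_Csum. apply Csum_ext. intros i hi.
  rewrite Cpow_scale. unfold monic_coef, rescale.
  destruct (Nat.eqb_spec i 0); [Cring|]. destruct (Nat.eqb_spec i n) as [->|]; [Cring|].
  assert (e1 : sg ^ n = sg ^ i * sg ^ (n - i)) by (rewrite <- pow_add; f_equal; lia).
  assert (sg ^ (n - i) <> 0) by (apply pow_nonzero; lra).
  destruct (c i) as [u v], (Cpow z i) as [w1 w2]. unfold Cmul, CofR; simpl. rewrite e1. f_equal; field; auto.
Qed.

Lemma dpoly_rescale n c sg z : (1 <= n)%nat -> 0 < sg ->
  dpoly n c (Cmul (CofR sg) z) = Cmul (CofR (sg ^ (n - 1))) (dpoly n (rescale n c sg) z).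
Proof.
  intros hn hs. rewrite !dpoly_peval by auto. unfold peval. rewrite Cmul_Csum. apply Csum_ext. intros i hi.
  rewrite Cpow_scale. unfold deriv_coef, rescale.
  destruct (Nat.eqb_spec (S i) n) as [<-|]. { replace (S i - 1)%nat with i by lia. Cring. }
  assert (e1 : sg ^ (n - 1) = sg ^ i * sg ^ (n - S i)) by (rewrite <- pow_add; f_equal; lia).
  assert (sg ^ (n - S i) <> 0) by (apply pow_nonzero; lra).
  destruct (c (S i)) as [u v], (Cpow z i) as [w1 w2]. unfold Cmul, CofR; simpl. rewrite e1. f_equal; field; auto.
Qed.

Definition Cprod (l : list C) : C := fold_right Cmul C1 l.

(** * Roots, via the algebraically closed field [R[i]] *)

Module ComplexPoly.
Import all_boot all_order all_algebra Rstruct complex.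
Import Order.TTheory GRing.Theory Num.Theory.
Local Open Scope ring_scope.
Local Open Scope complex_scope.

Definition toRi (z : Defs.C) : R[i] := Complex z.1 z.2.
Definition ofRi (z : R[i]) : Defs.C := let: Complex a b := z in (a, b).

Lemma toRiK z : ofRi (toRi z) = z. Proof. by case: z. Qed.
Lemma ofRiK z : toRi (ofRi z) = z. Proof. by case: z. Qed.
Lemma toRi_inj z w : toRi z = toRi w -> z = w.
Proof. by move=> h; rewrite -(toRiK z) h toRiK. Qed.

Lemma toRi_add z w : toRi (Cadd z w) = toRi z + toRi w. Proof. by case: z; case: w. Qed.
Lemma toRi_mul z w : toRi (Cmul z w) = toRi z * toRi w. Proof. by case: z; case: w. Qed.
Lemma toRi_sub z w : toRi (Csub z w) = toRi z - toRi w. Proof. by case: z; case: w. Qed.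
Lemma toRi_pow z k : toRi (Cpow z k) = toRi z ^+ k.
Proof. elim: k => [|k IH] //=. by rewrite toRi_mul IH exprS. Qed.
Lemma toRi_nat (k : nat) : toRi (CofR (INR k)) = k%:R.
Proof. by rewrite /toRi /CofR /= INRE -(rmorph_nat (real_complex R)). Qed.

Lemma toRi_Csum k t : toRi (Csum k t) = \sum_(i < k) toRi (t i).
Proof. elim: k => [|k IH] /=. by rewrite big_ord0. by rewrite toRi_add IH big_ord_recr. Qed.

Definition cpoly (m : nat) (c : nat -> Defs.C) : {poly R[i]} := \poly_(i < m.+1) toRi (c i).

Lemma toRi_peval m c x : toRi (peval m c x) = (cpoly m c).[toRi x].
Proof.
  rewrite /peval toRi_Csum /cpoly horner_poly. apply: eq_bigr => i _. by rewrite toRi_mul toRi_pow.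
Qed.

Lemma toRi_Cprod x (r : seq R[i]) :
  toRi (Cprod (List.map (fun z => Csub x z) (List.map ofRi r))) = \prod_(z <- r) (toRi x - z).
Proof.
  elim: r => [|z r IH] /=. by rewrite big_nil.
  by rewrite big_cons toRi_mul toRi_sub ofRiK IH.
Qed.

Lemma peval_factor m c : c m <> C0 ->
  exists rs : list Defs.C, length rs = m /\
    forall x, peval m c x = Cmul (c m) (Cprod (List.map (fun z => Csub x z) rs)).
Proof.
  move=> hc.
  have hlc : toRi (c m) != 0 by apply/eqP => h; apply: hc; apply: toRi_inj; rewrite h.
  have hsz : size (cpoly m c) = m.+1 by rewrite /cpoly size_poly_eq.
  have hlead : lead_coef (cpoly m c) = toRi (c m) by rewrite lead_coefE hsz /cpoly coef_poly ltnSn.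
  case: (closed_field_poly_normal (cpoly m c)) => r hr.
  exists (List.map ofRi r). split.
  - rewrite length_map. move: hsz. rewrite hr size_scale ?hlead // size_prod_XsubC. by case.
  - move=> x. apply: toRi_inj. rewrite toRi_peval toRi_mul toRi_Cprod {1}hr hornerZ hlead horner_prod.
    congr (_ * _). apply: eq_bigr => z _. by rewrite hornerXsubC.
Qed.

Lemma cpoly_deriv n c : (1 <= n)%N ->
  (cpoly n (monic_coef n c))^`() = cpoly (n - 1) (deriv_coef n c).
Proof.
  move=> hn. apply/polyP => i. rewrite coef_deriv /cpoly !coef_poly subn1 prednK // ltnS.
  case: (ltnP i n) => hi; last by rewrite mul0rn.
  rewrite /deriv_coef /monic_coef. change (Nat.eqb (S i) 0) with false.
  case: (Nat.eqb_spec (S i) n) => [<-|_].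
  - by rewrite toRi_nat.
  - by rewrite toRi_mul toRi_nat mulr_natl.
Qed.

Notation F := (R[i]).

Lemma mupZ (c : F) (q : {poly F}) z : c != 0 -> mup z (c *: q) = mup z q.
Proof.
  move=> hc. have [->|hq] := eqVneq q 0; first by rewrite scaler0.
  have hcq : c *: q != 0 by rewrite scaler_eq0 negb_or hc.
  apply/eqP; rewrite eqn_leq; apply/andP; split.
  - by rewrite mup_geq // -(dvdpZr _ _ hc) -mup_geq.
  - by rewrite mup_geq // (dvdpZr _ _ hc) -mup_geq.
Qed.

Lemma mup_deriv_lt (P : {poly F}) z : P^`() != 0 -> root P z -> (mup z P^`() < mup z P)%N.
Proof.
  move=> hd hz. have hP : P != 0 by apply: contraNneq hd => ->; rewrite derivC.
  set k := mup z P.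
  have hk : (1 <= k)%N by rewrite mup_geq // expr1 dvdp_XsubCl.
  have : ('X - z%:P) ^+ k %| P by rewrite -mup_geq.
  have hndiv : ~~ (('X - z%:P) ^+ k.+1 %| P) by rewrite -mup_ltn.
  case/dvdpP => Q hQ.
  have hQz : ~~ root Q z.
  { apply: contra hndiv => hr. rewrite hQ exprSr [X in X %| _]mulrC.
    by apply: dvdp_mul => //; rewrite dvdp_XsubCl. }
  rewrite mup_ltn //. apply/negP.
  rewrite hQ derivM deriv_exp derivXsubC mul1r dvdp_addr; last by apply: dvdp_mull; apply: dvdpp.
  have [j hj] : exists j, k = j.+1 by exists k.-1; rewrite prednK.
  rewrite hj /= exprS mulrnAr -mulrnAl dvdp_mul2r; last by rewrite expf_neq0 // polyXsubC_eq0.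
  rewrite dvdp_XsubCl /root hornerMn mulrn_eq0 /= => h. by rewrite /root h in hQz.
Qed.

Lemma size_derivF (p : {poly F}) : size p^`() = (size p).-1.
Proof.
have [lep1|lt1p] := leqP (size p) 1.
  by rewrite {1}[p]size1_polyC // derivC size_poly0 -subn1 (eqnP lep1).
rewrite size_poly_eq // mulrn_eq0 -subn2 -subSn // subn2.
by rewrite lead_coef_eq0 -size_poly_eq0 -(subnKC lt1p).
Qed.

Lemma count_lt_constant (T : eqType) (s r : seq T) (z0 : T) : z0 \in s -> size r = (size s).+1 ->
  (forall z, z \in s -> (count_mem z s < count_mem z r)%N) -> forall x, x \in r -> x = z0.
Proof.
  move=> hz0 hsz hcnt.
  have hle x : (count_mem x (s ++ undup s) <= count_mem x r)%N.
  { rewrite count_cat (count_uniq_mem x (undup_uniq s)) mem_undup.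
    case hx: (x \in s) => /=; first by rewrite addn1; apply: hcnt.
    by rewrite addn0 (count_memPn (negbT hx)). }
  (* [s] and its distinct elements fit into [r], which has only one more element than [s]. *)
  have hu : (size (undup s) <= 1)%N.
  { case/count_subseqP: hle => s' hsub hperm. have := size_subseq hsub.
    by rewrite -(perm_size hperm) size_cat hsz -addn1 leq_add2l. }
  have hall x : x \in s -> x = z0.
  { move=> hx. have hx' : x \in undup s by rewrite mem_undup.
    have hz0' : z0 \in undup s by rewrite mem_undup.
    move: hu hx' hz0'. case: (undup s) => [|a [|b l]] //= _. by rewrite !inE => /eqP -> /eqP ->. }
  have hcs : count_mem z0 s = size s.
  { apply/eqP. rewrite -all_count. apply/allP => x hx /=. by rewrite (hall x hx). }
  have hcr : count_mem z0 r = size r.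
  { apply/eqP; rewrite eqn_leq count_size /= hsz -hcs. exact: hcnt. }
  move=> x hx. move/eqP: hcr. rewrite -all_count => /allP /(_ x hx) /= /eqP. by [].
Qed.

(* Counting multiplicities: each of the [n - 1] critical points has strictly smaller multiplicity
   in [P'] than in [P], so all [n] roots of [P] coincide. *)
Lemma monic_crit_roots_Xn (P : {poly F}) (n : nat) : (2 <= n)%N -> P \is monic -> size P = n.+1 ->
  root P 0 -> (forall z, root P^`() z -> root P z) -> P = 'X ^+ n.
Proof.
  move=> hn hmon hsz h0 hcrit.
  case: (closed_field_poly_normal P) => rs hrs. rewrite (monicP hmon) scale1r in hrs.
  have hszrs : size rs = n by move: hsz; rewrite hrs size_prod_XsubC => -[].
  have hd0 : P^`() != 0.
  { rewrite -size_poly_eq0 size_derivF hsz /=. by apply/eqP => h; rewrite h in hn. }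
  case: (closed_field_poly_normal P^`()) => s hs.
  have hlc : lead_coef P^`() != 0 by rewrite lead_coef_eq0.
  have hszs : size s = n.-1.
  { by have := size_derivF P; rewrite hsz /= hs size_scale // size_prod_XsubC => <-. }
  have hcnt z : z \in s -> (count_mem z s < count_mem z rs)%N.
  { move=> hz. have hr : root P z by apply: hcrit; rewrite hs rootZ // root_prod_XsubC.
    have := mup_deriv_lt P z hd0 hr.
    by rewrite {2}hrs mu_prod_XsubC {1}hs mupZ // mu_prod_XsubC. }
  have hz0 : head 0 s \in s by rewrite -nth0 mem_nth // hszs -subn1 subn_gt0.
  have hsz' : size rs = (size s).+1 by rewrite hszs hszrs prednK // ltnW.
  have hallr := count_lt_constant _ _ _ _ hz0 hsz' hcnt.
  have h0rs : 0 \in rs by move: h0; rewrite hrs root_prod_XsubC.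
  rewrite hrs (eq_big_seq (fun=> 'X)) => [|x hx]; first by rewrite (big_nth 0) prodr_const_nat subn0 hszrs.
  by rewrite (hallr x hx) -(hallr 0 h0rs) subr0.
Qed.

Lemma crit_roots_coef0 n c : le 2 n ->
  (forall z, dpoly n c z = C0 -> Defs.poly n c z = C0) ->
  forall k, le 1 k -> lt k n -> c k = C0.
Proof.
  move=> hn hcrit k hk1 hkn.
  have hn1 : le 1 n by lia.
  set P := cpoly n (monic_coef n c).
  have hcoefn : toRi (monic_coef n c n) = 1 by rewrite monic_coef_lead.
  have hsz : size P = n.+1 by rewrite /P /cpoly size_poly_eq //= hcoefn oner_neq0.
  have hmon : P \is monic by rewrite monicE lead_coefE hsz /P /cpoly coef_poly ltnSn hcoefn.
  have h0 : root P 0 by rewrite /root horner_coef0 /P /cpoly coef_poly.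
  have hcr z : root P^`() z -> root P z.
  { rewrite /P cpoly_deriv; last by apply/ssrnat.leP.
    rewrite /root -(ofRiK z) -!toRi_peval -dpoly_peval // -poly_peval //.
    move/eqP => h. apply/eqP. rewrite hcrit //. exact: toRi_inj. }
  have := congr1 (fun q : {poly F} => q`_k) (monic_crit_roots_Xn P n (introT ssrnat.leP hn) hmon hsz h0 hcr).
  rewrite /= coefXn /P /cpoly coef_poly monic_coef_mid //.
  have -> : (k < n.+1)%N by apply/ssrnat.leP; lia.
  have -> : (k == n) = false by apply/eqP; lia.
  move=> h. apply: toRi_inj. exact: h.
Qed.

End ComplexPoly.

Lemma Cnorm_Cprod_ge x rs e : 0 <= e -> (forall r, In r rs -> e <= Cnorm (Csub x r)) ->
  e ^ length rs <= Cnorm (Cprod (map (fun z => Csub x z) rs)).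
Proof.
  intros he. induction rs as [|a rs IH]; intros h; simpl.
  - rewrite Cnorm_C1; lra.
  - rewrite Cnorm_mul. apply Rmult_le_compat; auto using pow_le.
    + apply h; left; auto.
    + apply IH; intros; apply h; right; auto.
Qed.

Lemma Cprod_eq0 x rs : Cprod (map (fun z => Csub x z) rs) = C0 <-> In x rs.
Proof.
  induction rs as [|a rs IH]; simpl.
  - split; [intro h; exfalso; apply C1_neq0, h | contradiction].
  - split.
    + intro h. assert (hn : Cnorm (Csub x a) * Cnorm (Cprod (map (fun z => Csub x z) rs)) = 0).
      { rewrite <- Cnorm_mul, h. apply Cnorm_C0. }
      apply Rmult_integral in hn as [hn|hn].
      * left; symmetry; apply Cnorm_sub_eq0; auto.
      * right; apply IH, Cnorm_eq0; auto.
    + intros [<-|h]. { replace (Csub a a) with C0 by Cring. Cring. }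
      apply IH in h. rewrite h. Cring.
Qed.

Lemma peval_roots m c : c m <> C0 -> exists rs : list C,
  forall y, peval m c y = C0 <-> In y rs.
Proof.
  intro hc. destruct (ComplexPoly.peval_factor m c hc) as [rs [_ hf]]. exists rs. intro y.
  rewrite hf, <- Cprod_eq0. split; intro h; [|rewrite h; Cring].
  apply Cnorm_eq0. apply (f_equal Cnorm) in h. rewrite Cnorm_mul, Cnorm_C0 in h.
  apply Rmult_integral in h as [h|h]; auto. exfalso; apply hc, Cnorm_eq0, h.
Qed.

Lemma peval_has_root m c : (1 <= m)%nat -> c m <> C0 -> exists r, peval m c r = C0.
Proof.
  intros hm hc. destruct (ComplexPoly.peval_factor m c hc) as [[|r rs] [hl hf]]; simpl in hl; [lia|].
  exists r. rewrite hf. replace (Cprod (map (fun z => Csub r z) (r :: rs))) with C0 by (symmetry; apply Cprod_eq0; left; auto).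
  Cring.
Qed.

(* A polynomial that is small at [x] has a root near [x]: it is the product of its leading coefficient
   and the distances from [x] to its [m] roots. *)
Lemma root_near m c x e : c m <> C0 -> 0 < e ->
  Cnorm (peval m c x) < Cnorm (c m) * e ^ m ->
  exists r, peval m c r = C0 /\ Cnorm (Csub x r) < e.
Proof.
  intros hc he hx. destruct (ComplexPoly.peval_factor m c hc) as [rs [hl hf]].
  destruct (classic (exists r, In r rs /\ Cnorm (Csub x r) < e)) as [[r [hr1 hr2]]|hno].
  - exists r. split; auto. rewrite hf. replace (Cprod (map (fun z => Csub r z) rs)) with C0
      by (symmetry; apply Cprod_eq0; auto). Cring.
  - exfalso. assert (h : e ^ m <= Cnorm (Cprod (map (fun z => Csub x z) rs))).
    { rewrite <- hl. apply Cnorm_Cprod_ge; [lra|]. intros r hr.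
      apply Rnot_lt_le. intro; apply hno; eauto. }
    rewrite hf, Cnorm_mul in hx. pose proof (Cnorm_pos _ hc). nra.
Qed.

Lemma root_continuity m c0 x0 : c0 m <> C0 -> peval m c0 x0 = C0 -> forall e, 0 < e ->
  exists eta, 0 < eta /\ forall c, c m = c0 m ->
    (forall i, (i <= m)%nat -> Cnorm (Csub (c i) (c0 i)) <= eta) ->
    exists r, peval m c r = C0 /\ Cnorm (Csub r x0) < e.
Proof.
  intros hc h0 e he.
  destruct (finite_bound (fun i => Cnorm (c0 i)) (S m)) as [M [hM1 hM]].
  assert (hlc : 0 < Cnorm (c0 m) * e ^ m) by (apply Rmult_lt_0_compat; [apply Cnorm_pos | apply pow_lt]; auto).
  destruct (peval_uniform_cont m (Cnorm x0) M _ (Cnorm_ge0 x0) ltac:(lra) hlc) as [eta [heta hcont]].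
  exists eta; split; auto. intros c hcm hd.
  destruct (root_near m c x0 e) as [r [hr hxr]]; [rewrite hcm; auto | auto | |].
  - rewrite hcm. replace (peval m c x0) with (Csub (peval m c x0) (peval m c0 x0)) by (rewrite h0; apply Csub_0_r).
    apply hcont; auto. { lra. } { rewrite Cnorm_sub_diag; lra. } intros i hi; apply hM; lia.
  - exists r; split; auto. rewrite Cnorm_sub_comm; auto.
Qed.

Lemma dpoly_root_continuity m c0 b : (1 <= m)%nat -> dpoly m c0 b = C0 -> forall eps, 0 < eps ->
  exists del, 0 < del /\ forall c, (forall k, (1 <= k)%nat -> (k < m)%nat -> Cnorm (Csub (c k) (c0 k)) <= del) ->
    exists b', dpoly m c b' = C0 /\ Cnorm (Csub b' b) < eps.
Proof.
  intros hm hb eps heps. rewrite dpoly_peval in hb by auto.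
  assert (hlead : deriv_coef m c0 (m - 1) <> C0).
  { rewrite deriv_coef_lead by auto. intro h. apply (f_equal fst) in h. simpl in h.
    assert (0 < INR m) by (apply lt_0_INR; lia). lra. }
  destruct (root_continuity (m - 1) (deriv_coef m c0) b hlead hb eps heps) as [eta [heta h]].
  assert (hm0 : 0 < INR m) by (apply lt_0_INR; lia).
  exists (eta / INR m). split; [apply Rdiv_lt_0_compat; auto|]. intros c hc.
  destruct (h (deriv_coef m c)) as [b' [hb' hbb]].
  - rewrite !deriv_coef_lead by auto. reflexivity.
  - intros i hi. replace eta with (INR m * (eta / INR m)) by (field; lra).
    apply deriv_coef_close; auto. apply Rlt_le, Rdiv_lt_0_compat; auto.
  - exists b'. split; auto. rewrite dpoly_peval by auto. exact hb'.
Qed.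

(** * Heine-Borel, through MathComp-Analysis on [R^(n + n)] *)

Module HeineBorel.
Import all_boot all_order all_algebra all_classical all_reals all_analysis Rstruct Rstruct_topology finmap.
Import Order.TTheory GRing.Theory Num.Theory.
Local Open Scope ring_scope.
Local Open Scope classical_set_scope.

Section Coordinates.
Variable n : nat.

(* A row vector [v] of [R^(n + n)] encodes the point [(v_j + i v_(n + j))_(j < n)] of [C^n]. *)
Definition vec_to_C (v : 'rV[R]_(n + n)) (i : nat) : Defs.C :=
  match @insub _ (fun k => (k < n)%N) 'I_n i with
  | Some j => (v ord0 (lshift n j), v ord0 (rshift n j))
  | None => C0 end.

Definition C_to_vec (p : nat -> Defs.C) : 'rV[R]_(n + n) :=
  \row_(j < n + n) match fintype.split j with inl a => fst (p a) | inr b => snd (p b) end.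

Lemma C_to_vecK p i : (i < n)%N -> vec_to_C (C_to_vec p) i = p i.
Proof.
  move=> hi. rewrite /vec_to_C insubT /= !mxE (unsplitK (inl _)) (unsplitK (inr _)) /=. by case: (p i).
Qed.

Lemma vec_to_C_close (v w : 'rV[R]_(n + n)) (r : R) : (forall j, `|v ord0 j - w ord0 j| < r) ->
  forall i, (i < n)%N -> Rlt (Cnorm (Csub (vec_to_C v i) (vec_to_C w i))) (r + r).
Proof.
  move=> h i hi. rewrite /vec_to_C insubT /=.
  apply: Rle_lt_trans; first exact: Cnorm_le_abs.
  rewrite /Csub /=. apply: Rplus_lt_compat; apply/RltP; exact: h.
Qed.

Lemma vec_entry_bound (v : 'rV[R]_(n + n)) (M : R) :
  (forall i, (i < n)%N -> Rle (Cnorm (vec_to_C v i)) M) -> forall j, `|v ord0 j| <= M.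
Proof.
  move=> h j. rewrite -(splitK j).
  case: (fintype.split j) => [a|a] /=; apply/RleP;
    have := h a (ltn_ord a); rewrite /vec_to_C (insubT (fun k => (k < n)%N) (ltn_ord a)) /=;
    have -> : Sub (nat_of_ord a) (ltn_ord a) = a :> 'I_n by apply: val_inj.
  - exact: Rle_trans (Rabs_fst_le (_, _)).
  - exact: Rle_trans (Rabs_snd_le (_, _)).
Qed.

Lemma open_vec_to_C (P : (nat -> Defs.C) -> Prop) : open_n n P -> open [set v | P (vec_to_C v)].
Proof.
  move=> hP. rewrite openE => v /= hv. have [r [hr hr']] := hP _ hv.
  have hr2 : Rlt 0 (r / 2) by lra.
  apply/nbhs_ballP. exists (r / 2)%coqR; first by apply/RltP.
  move=> w [_ hw] /=. apply: hr' => i hi.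
  have hvw j : `|v ord0 j - w ord0 j| < (r / 2)%coqR by have := hw ord0 j; rewrite /ball.
  have := vec_to_C_close v w (r / 2)%coqR hvw i (introT ssrnat.ltP hi).
  change (Rlt (Cnorm (Csub (vec_to_C v i) (vec_to_C w i))) (r / 2 + r / 2)%coqR ->
          Rlt (Cnorm (Csub (vec_to_C v i) (vec_to_C w i))) r).
  by have -> : (r / 2 + r / 2)%coqR = r by field.
Qed.

End Coordinates.

Lemma In_of_mem (T : eqType) (s : seq T) x : x \in s -> List.In x s.
Proof. elim: s => [|a s IH] //=. rewrite inE => /orP [/eqP ->|h]; [by left | right; exact: IH]. Qed.

Lemma open_n_ext n (P : (nat -> Defs.C) -> Prop) p q : open_n n P ->
  (forall i, lt i n -> p i = q i) -> P p -> P q.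
Proof.
  move=> hP hpq hp. have [r [hr hr']] := hP p hp. apply: hr' => i hi.
  change (Rlt (Cnorm (Csub (p i) (q i))) r). by rewrite (hpq i hi) Cnorm_sub_diag.
Qed.

Lemma compact_n_of_bounded_closed (n : nat) (K : (nat -> Defs.C) -> Prop) :
  (exists M, forall p, K p -> forall i, lt i n -> Rle (Cnorm (p i)) M) ->
  open_n n (fun q => ~ K q) ->
  compact_n n K.
Proof.
  move=> [M hM] hcl I U hUo hcov.
  have Kext p q : (forall i, lt i n -> p i = q i) -> K p -> K q.
  { move=> hpq hp. apply: Classical_Prop.NNPP => hq.
    exact: (open_n_ext n (fun q => ~ K q) q p hcl (fun i hi => esym (hpq i hi)) hq hp). }
  case: (Classical_Prop.classic (exists p, K p)) => [[p0 hp0]|hne]; last first.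
  { exists nil => p hp; exfalso; apply: hne; by exists p. }
  have [i0 _] := hcov p0 hp0.
  pose A := [set v : 'rV[R]_(n + n) | K (vec_to_C n v)].
  have hbd : bounded_set A.
  { exists (Rabs M); split; first exact: num_real.
    move=> x hx v hv. change (mx_norm v <= x). rewrite mx_normrE.
    have hx' : Rlt (Rabs M) x by apply/RltP.
    apply: bigmax_le => [|[a b] _ /=].
    - apply: le_trans (ltW hx). apply/RleP. exact: Rabs_pos.
    - rewrite (ord1 a). apply: le_trans (vec_entry_bound n v M _ b) _.
      + move=> i hi. by apply: (hM _ hv); apply/ssrnat.ltP.
      + apply/RleP. have := Rle_abs M. lra. }
  have hcl' : closed A.
  { rewrite -[A]setCK. apply: open_closedC. exact: (open_vec_to_C n (fun q => ~ K q)). }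
  have := bounded_closed_compact hbd hcl'. rewrite compact_cover => hcomp.
  pose pick v := epsilon (inhabits i0) (fun i => U i (vec_to_C n v)).
  have hpick v : A v -> U (pick v) (vec_to_C n v).
  { move=> hv. apply: (epsilon_spec (inhabits i0) (fun i => U i (vec_to_C n v))). exact: hcov. }
  pose f v := [set w : 'rV[R]_(n + n) | U (pick v) (vec_to_C n w)].
  have [D _ hD] := hcomp _ A f (fun v _ => open_vec_to_C n _ (hUo (pick v))) (fun v hv => ex_intro2 _ _ v hv (hpick v hv)).
  exists (List.map pick (enum_fset D)) => p hp.
  have hA : A (C_to_vec n p) by apply: (Kext p) hp => i hi; rewrite C_to_vecK //; apply/ssrnat.ltP.
  have [w hw hfw] := hD _ hA.
  exists (pick w). split; first by apply: List.in_map; exact: In_of_mem.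
  apply: (open_n_ext n _ _ _ (hUo (pick w))) hfw => i hi. rewrite C_to_vecK //. by apply/ssrnat.ltP.
Qed.

End HeineBorel.

(** * A critical value of size [s^m] *)

Section Normalised.
Variable m : nat.
Hypothesis hm : (2 <= m)%nat.

(* Points [u] of [C^(m-1)] encode [c k = u (k - 1)] for [1 <= k < m]; the normalised ones form a compact set. *)
Definition shifted (u : nat -> C) (k : nat) : C := u (k - 1)%nat.

Definition normalised (u : nat -> C) : Prop :=
  scale_le m (shifted u) 2 /\ exists k, (1 <= k)%nat /\ (k < m)%nat /\ 1 <= Cnorm (shifted u k).

Definition crit_value_gt (j : nat) (u : nat -> C) : Prop :=
  exists z, dpoly m (shifted u) z = C0 /\ / INR (S j) < Cnorm (poly m (shifted u) z).

Lemma normalised_bounded : exists M, forall u, normalised u -> forall i, (i < m - 1)%nat -> Cnorm (u i) <= M.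
Proof.
  exists (2 ^ m). intros u [h _] i hi. replace (u i) with (shifted u (S i)) by (unfold shifted; f_equal; lia).
  eapply Rle_trans; [apply h; lia | apply Rle_pow; lra || lia].
Qed.

Lemma normalised_complement_open : open_n (m - 1) (fun u => ~ normalised u).
Proof.
  intros q hq. apply not_and_or in hq as [hA|hB].
  - apply not_all_ex_not in hA as [k hk]. apply imply_to_and in hk as [hk1 hk].
    apply imply_to_and in hk as [hk2 hk]. apply Rnot_le_lt in hk.
    exists (Cnorm (shifted q k) - 2 ^ (m - k)). split; [lra|].
    intros p hp [hpA _]. pose proof (hpA k hk1 hk2). pose proof (hp (k - 1)%nat ltac:(lia)) as hpk.
    change (Cnorm (Csub (shifted q k) (shifted p k)) < Cnorm (shifted q k) - 2 ^ (m - k)) in hpk.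
    pose proof (Cnorm_triang_inv (shifted q k) (shifted p k)). lra.
  - assert (h1 : forall i, (i < m - 1)%nat -> Cnorm (q i) < 1).
    { intros i hi. apply Rnot_le_lt. intro hc. apply hB. exists (S i).
      unfold shifted. replace (S i - 1)%nat with i by lia. repeat split; auto; lia. }
    destruct (finite_max_lt (fun i => Cnorm (q i)) (m - 1) 1 h1) as [M [hM hM']].
    exists (1 - M). split; [lra|]. intros p hp [_ [k [hk1 [hk2 hpk]]]].
    pose proof (dist_n_bound _ _ _ _ _ hp hM' (k - 1)%nat ltac:(lia)). unfold shifted in hpk. lra.
Qed.

Lemma crit_value_gt_open j : open_n (m - 1) (crit_value_gt j).
Proof.
  intros u [z [hz hgap]].
  set (gap := Cnorm (poly m (shifted u) z) - / INR (S j)). assert (hgap0 : 0 < gap) by (unfold gap; lra).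
  destruct (finite_bound (fun i => Cnorm (u i)) (m - 1)) as [M [hM1 hM]].
  destruct (peval_uniform_cont m (Cnorm z) M gap (Cnorm_ge0 z) ltac:(lra) hgap0) as [del1 [hdel1 hpoly]].
  destruct (dpoly_root_continuity m (shifted u) z ltac:(lia) hz del1 hdel1) as [del2 [hdel2 hcrit]].
  set (del := Rmin del1 del2).
  assert (h1 : del <= del1) by apply Rmin_l. assert (h2 : del <= del2) by apply Rmin_r.
  exists del. split; [apply Rmin_glb_lt; auto|]. intros u' hu'.
  assert (hcl : forall k, (1 <= k)%nat -> (k < m)%nat -> Cnorm (Csub (shifted u' k) (shifted u k)) <= del).
  { intros k hk1 hk2. rewrite Cnorm_sub_comm. apply Rlt_le, hu'. lia. }
  destruct (hcrit (shifted u')) as [z' [hz' hzz]].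
  { intros k hk1 hk2. eapply Rle_trans; [apply hcl|]; auto. }
  exists z'. split; auto.
  assert (hclose : Cnorm (Csub (poly m (shifted u') z') (poly m (shifted u) z)) < gap).
  { rewrite !poly_peval by lia. apply hpoly; [lra | lra | |].
    - intros i hi. eapply Rle_trans; [apply monic_coef_close|]; eauto. apply Rlt_le, Rmin_glb_lt; auto.
    - apply monic_coef_bound; auto. intros k hk1 hk2. apply hM. lia. }
  pose proof (Cnorm_triang_inv (poly m (shifted u) z) (poly m (shifted u') z')) as htri.
  rewrite Cnorm_sub_comm in htri. unfold gap in *. lra.
Qed.

(* Every normalised polynomial has a nonzero critical value: otherwise all its critical points are
   roots and it would be [X^m]. *)
Lemma normalised_crit_value_gt u : normalised u -> exists j, crit_value_gt j u.
Proof.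
  intros [hA [k [hk1 [hk2 huk]]]].
  destruct (classic (exists z, dpoly m (shifted u) z = C0 /\ poly m (shifted u) z <> C0)) as [[z [hz1 hz2]]|hno].
  - apply Cnorm_pos in hz2. destruct (INR_unbounded (/ Cnorm (poly m (shifted u) z))) as [j hj].
    exists j, z. split; auto. rewrite <- (Rinv_inv (Cnorm _)).
    apply Rinv_lt_contravar; [apply Rmult_lt_0_compat|]; [apply Rinv_0_lt_compat; auto | |];
      rewrite S_INR; pose proof (pos_INR j); lra.
  - exfalso. assert (hc : forall z, dpoly m (shifted u) z = C0 -> poly m (shifted u) z = C0).
    { intros z hz. apply NNPP. intro hn. apply hno. eauto. }
    rewrite (ComplexPoly.crit_roots_coef0 m (shifted u) hm hc k hk1 hk2), Cnorm_C0 in huk. lra.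
Qed.

Lemma normalised_crit_value_ge : exists kap, 0 < kap /\ forall c, scale_le m c 2 ->
  (exists k, (1 <= k)%nat /\ (k < m)%nat /\ 1 <= Cnorm (c k)) ->
  exists z, dpoly m c z = C0 /\ kap <= Cnorm (poly m c z).
Proof.
  destruct (HeineBorel.compact_n_of_bounded_closed (m - 1) normalised normalised_bounded
     normalised_complement_open nat crit_value_gt crit_value_gt_open normalised_crit_value_gt) as [l hl].
  set (J := fold_right Nat.max O l).
  assert (hJ : forall j, In j l -> (j <= J)%nat).
  { unfold J. clear hl. induction l as [|a l IH]; simpl; intros j hj; [contradiction|].
    destruct hj as [<-|hj]; [lia | specialize (IH j hj); lia]. }
  exists (/ INR (S J)). split; [apply Rinv_0_lt_compat, lt_0_INR; lia|].
  intros c hc1 hc2. set (u := fun i => c (S i)).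
  assert (hcu : forall k, (1 <= k)%nat -> (k < m)%nat -> shifted u k = c k).
  { intros k h1 h2. unfold shifted, u. f_equal; lia. }
  assert (hu : normalised u).
  { split.
    - intros k h1 h2. rewrite hcu; auto.
    - destruct hc2 as [k [h1 [h2 h3]]]. exists k. rewrite hcu; auto. }
  destruct (hl u hu) as [j [hj [z [hz1 hz2]]]]. exists z.
  rewrite (dpoly_ext m c (shifted u)), (poly_ext m c (shifted u)) by (lia || (intros; symmetry; auto)).
  split; auto. apply Rle_trans with (/ INR (S j)); [|lra].
  apply Rinv_le_contravar; [apply lt_0_INR; lia | apply le_INR; specialize (hJ j hj); lia].
Qed.

End Normalised.

Lemma large_critical_value m : (1 <= m)%nat -> exists A, 0 < A /\ forall c s, 0 < s -> scale_le m c s ->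
  (exists k, (1 <= k)%nat /\ (k < m)%nat /\ (s / 2) ^ (m - k) <= Cnorm (c k)) ->
  exists z, dpoly m c z = C0 /\ A * s ^ m <= Cnorm (poly m c z).
Proof.
  intro hm1. destruct (Nat.eq_dec m 1) as [->|hm].
  { exists 1. split; [lra|]. intros c s _ _ [k hk]. lia. }
  destruct (normalised_crit_value_ge m ltac:(lia)) as [kap [hkap h]].
  exists (kap / 2 ^ m). split; [apply Rdiv_lt_0_compat; auto; apply pow_lt; lra|].
  intros c s hs hc [k [hk1 [hk2 hk3]]]. set (sg := s / 2). assert (hsg : 0 < sg) by (unfold sg; lra).
  assert (hsgk : forall k, 0 < sg ^ (m - k)) by (intros; apply pow_lt; auto).
  destruct (h (rescale m c sg)) as [z [hz1 hz2]].
  - intros k' h1 h2. rewrite Cnorm_rescale by auto. specialize (hsgk k').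
    apply Rmult_le_reg_r with (sg ^ (m - k')); auto. unfold Rdiv. rewrite Rmult_assoc, Rinv_l, Rmult_1_r by lra.
    rewrite <- Rpow_mult_distr. replace (2 * sg) with s by (unfold sg; field). apply hc; auto.
  - exists k. repeat split; auto. rewrite Cnorm_rescale by auto. specialize (hsgk k).
    apply Rmult_le_reg_r with (sg ^ (m - k)); auto. unfold Rdiv. rewrite Rmult_assoc, Rinv_l, Rmult_1_r by lra. unfold sg; lra.
  - exists (Cmul (CofR sg) z). split.
    + rewrite dpoly_rescale, hz1 by (auto; lia). Cring.
    + rewrite poly_rescale, Cnorm_mul, Cnorm_CofR, Rabs_right by (auto; lia || (apply Rle_ge, pow_le; lra)).
      replace (kap / 2 ^ m * s ^ m) with (sg ^ m * kap) 
        by (unfold sg, Rdiv; rewrite Rpow_mult_distr, pow_inv; field; apply pow_nonzero; lra).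
      apply Rmult_le_compat_l; auto. apply pow_le; lra.
Qed.

Definition set_coef0 (c : nat -> C) (w : C) (i : nat) : C := if Nat.eqb i 0 then w else c i.

Lemma peval_set_coef0 m c w y : peval m (set_coef0 c w) y = Cadd (peval m c y) (Csub w (c O)).
Proof.
  unfold peval. rewrite !Csum_shift.
  rewrite (Csum_ext m (fun i => Cmul (set_coef0 c w (S i)) (Cpow y (S i))) (fun i => Cmul (c (S i)) (Cpow y (S i)))) by reflexivity.
  unfold set_coef0; simpl. Cring.
Qed.

Lemma unbounded_of_escape (P : C -> Prop) (x : nat -> C) :
  (forall k, P (x k) -> P (x (S k)) /\ Cnorm (x k) + 1 <= Cnorm (x (S k))) ->
  P (x O) -> ~ bounded_seq x.
Proof.
  intros hstep h0 [B hB].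
  assert (hk : forall k, P (x k) /\ Cnorm (x O) + INR k <= Cnorm (x k)).
  { induction k as [|k [hPk hk]]; [simpl; split; auto; lra|].
    destruct (hstep k hPk). rewrite S_INR. split; auto; lra. }
  destruct (INR_unbounded (B - Cnorm (x O))) as [j hj].
  destruct (hk j) as [_ h]. pose proof (hB j). lra.
Qed.


(* Up to a factor 2, [s] is the least scale of [c]: [c] lives at scale [s] but not at scale [s / 2]. *)
Definition tight_scale (m : nat) (c : nat -> C) (s : R) : Prop :=
  1 <= s /\ scale_le m c s /\
  (s = 1 \/ exists k, (1 <= k)%nat /\ (k < m)%nat /\ (s / 2) ^ (m - k) < Cnorm (c k)).

Lemma tight_scale_exists m c : exists s, tight_scale m c s.
Proof.
  set (P := fun j => scale_le m c (2 ^ j)).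
  assert (hP : exists j, P j).
  { destruct (finite_bound (fun i => Cnorm (c i)) m) as [M [_ hM]].
    destruct (INR_unbounded M) as [j hj]. exists j. intros k h1 h2.
    apply Rle_trans with (2 ^ j).
    - assert (INR j <= 2 ^ j).
      { clear. induction j; [simpl; lra|]. rewrite S_INR. simpl. pose proof (pow_R1_Rle 2 j). lra. }
      pose proof (hM k h2). lra.
    - rewrite <- pow_1 at 1. apply Rle_pow; [apply pow_R1_Rle; lra | lia]. }
    destruct hP as [j0 hj0]. induction j0 as [|j IH].
  { exists 1. split; [lra | split; auto]. }
  destruct (classic (P j)) as [hj|hj]; auto.
  exists (2 ^ S j). split; [apply pow_R1_Rle; lra | split; auto]. right.
  apply not_all_ex_not in hj as [k hk]. apply imply_to_and in hk as [hk1 hk].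
  apply imply_to_and in hk as [hk2 hk]. exists k. repeat split; auto.
  replace (2 ^ S j / 2) with (2 ^ j) by (simpl; field). lra.
Qed.

Section Correspondence.
Variables (d e : nat).
Hypothesis he : (1 <= e)%nat.
Hypothesis hde : (e < d)%nat.
Notation n := (d + e - 2)%nat.

Definition fcoef (p : nat -> C) := monic_coef d (coef_a d p).
Definition gcoef (p : nat -> C) := monic_coef e (coef_b d e p).

Lemma fpol_peval p x : fpol d p x = peval d (fcoef p) x.
Proof. apply poly_peval; lia. Qed.
Lemma gpol_peval p x : gpol d e p x = peval e (gcoef p) x.
Proof. apply poly_peval; lia. Qed.
Definition succ_coef (p : nat -> C) (a : C) := set_coef0 (gcoef p) (Copp (fpol d p a)).

Lemma succ_coef_lead p a : succ_coef p a e = C1.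
Proof.
  unfold succ_coef, set_coef0. replace (Nat.eqb e 0) with false by (symmetry; apply Nat.eqb_neq; lia).
  apply monic_coef_lead; lia.
Qed.

Lemma succ_coef_lead_neq0 p a : succ_coef p a e <> C0.
Proof. rewrite succ_coef_lead. apply C1_neq0. Qed.

Lemma peval_succ_coef p a y : peval e (succ_coef p a) y = Csub (gpol d e p y) (fpol d p a).
Proof. unfold succ_coef. rewrite peval_set_coef0, gpol_peval. unfold gcoef. rewrite monic_coef_0. Cring. Qed.

Lemma in_corr_iff_root p a y : in_corr d e p a y <-> peval e (succ_coef p a) y = C0.
Proof.
  rewrite peval_succ_coef. unfold in_corr. split; intro h.
  - rewrite h. Cring.
  - apply Csub_eq0, h.
Qed.

Definition pred_coef (p : nat -> C) (b : C) := set_coef0 (fcoef p) (Copp (gpol d e p b)).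

Lemma pred_coef_lead p b : pred_coef p b d = C1.
Proof.
  unfold pred_coef, set_coef0. replace (Nat.eqb d 0) with false by (symmetry; apply Nat.eqb_neq; lia).
  apply monic_coef_lead; lia.
Qed.

Lemma in_corr_iff_pred_root p x b : in_corr d e p x b <-> peval d (pred_coef p b) x = C0.
Proof.
  unfold pred_coef. rewrite peval_set_coef0, <- fpol_peval. unfold fcoef. rewrite monic_coef_0.
  unfold in_corr. split; intro h.
  - rewrite h. Cring.
  - symmetry. apply Csub_eq0. rewrite <- h. Cring.
Qed.

Lemma fcoef_close p q del : 0 <= del -> dist_n n q p del ->
  forall i, (i <= d)%nat -> Cnorm (Csub (fcoef p i) (fcoef q i)) <= del.
Proof.
  intros hdel h. apply monic_coef_close; auto. intros k h1 h2.
  rewrite Cnorm_sub_comm. apply Rlt_le, h. unfold coef_a; lia.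
Qed.

Lemma gcoef_close p q del : 0 <= del -> dist_n n q p del ->
  forall i, (i <= e)%nat -> Cnorm (Csub (gcoef p i) (gcoef q i)) <= del.
Proof.
  intros hdel h. apply monic_coef_close; auto. intros k h1 h2.
  rewrite Cnorm_sub_comm. apply Rlt_le, h. unfold coef_b; lia.
Qed.

Lemma fcoef_bound q M : 1 <= M -> (forall i, (i < n)%nat -> Cnorm (q i) <= M) ->
  forall i, (i <= d)%nat -> Cnorm (fcoef q i) <= M.
Proof. intros hM h. apply monic_coef_bound; auto. intros k h1 h2. apply h. unfold coef_a; lia. Qed.

Lemma gcoef_bound q M : 1 <= M -> (forall i, (i < n)%nat -> Cnorm (q i) <= M) ->
  forall i, (i <= e)%nat -> Cnorm (gcoef q i) <= M.
Proof. intros hM h. apply monic_coef_bound; auto. intros k h1 h2. apply h. unfold coef_b; lia. Qed.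

(** * Escape to infinity *)

Definition escape_zone (s t x : R) : Prop :=
  2 * INR d * s <= x /\ 2 * INR (S e) * 2 ^ e < x /\ 2 * INR (S e) * t ^ e < x ^ d.

Lemma escape_zone_ge1 s t x : escape_zone s t x -> 1 <= x.
Proof.
  intros [_ [h _]]. assert (1 <= INR (S e)) by (apply (le_INR 1); lia).
  assert (1 <= 2 ^ e) by (apply pow_R1_Rle; lra). nra.
Qed.

Lemma escape_zone_mono s t x y : escape_zone s t x -> x <= y -> escape_zone s t y.
Proof.
  intros hz hxy. pose proof (escape_zone_ge1 _ _ _ hz). destruct hz as [h1 [h2 h3]].
  split; [lra | split; [lra|]]. assert (x ^ d <= y ^ d) by (apply pow_incr; lra). lra.
Qed.

(* In the escape zone [|f(x)|] is of size [|x|^d], which forces every [y] with [g(y) = f(x)] to have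
   [|y| ~ |x|^(d/e) >= 2 |x|]. *)
Lemma escape_step p s t x y : 1 <= s -> 1 <= t ->
  scale_le d (coef_a d p) s -> scale_le e (coef_b d e p) t ->
  escape_zone s t (Cnorm x) -> in_corr d e p x y -> 2 * Cnorm x <= Cnorm y.
Proof.
  intros hs ht ha hb hz hxy. pose proof (escape_zone_ge1 _ _ _ hz) as hx1. destruct hz as [hx1' [hx2 hx3]].
  apply Rnot_lt_le. intro hy.
  pose proof (poly_norm_lower d (coef_a d p) s x ltac:(lia) hs ha hx1') as hl.
  pose proof (poly_norm_upper e (coef_b d e p) t y he ht hb) as hu.
  unfold in_corr, fpol, gpol in hxy. rewrite hxy in hu.
  pose proof (Cnorm_ge0 y).
  assert (hS : 0 < INR (S e)) by (apply lt_0_INR; lia).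
  assert (hxe : Cnorm x ^ e * Cnorm x <= Cnorm x ^ d) by (apply pow_mul_le_pow; auto).
  unfold Rmax in hu. destruct (Rle_dec (Cnorm y) t); [lra|].
  assert (hye : Cnorm y ^ e <= (2 * Cnorm x) ^ e) by (apply pow_incr; lra).
  rewrite Rpow_mult_distr in hye.
  assert (0 < Cnorm x ^ e) by (apply pow_lt; lra).
  assert (INR (S e) * (2 ^ e * Cnorm x ^ e) * 2 < Cnorm x ^ e * Cnorm x).
  { replace (INR (S e) * (2 ^ e * Cnorm x ^ e) * 2) with (Cnorm x ^ e * (2 * INR (S e) * 2 ^ e)) by ring.
    apply Rmult_lt_compat_l; auto. }
  assert (INR (S e) * Cnorm y ^ e <= INR (S e) * (2 ^ e * Cnorm x ^ e)) by (apply Rmult_le_compat_l; lra).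
  lra.
Qed.

Lemma escape_radius M : 0 <= M -> exists R0, 1 <= R0 /\
  forall p, (forall i, (i < n)%nat -> Cnorm (p i) <= M) ->
  forall x y, R0 < Cnorm x -> in_corr d e p x y -> Cnorm x + 1 <= Cnorm y.
Proof.
  intros hM. set (s := Rmax 1 M).
  assert (hs : 1 <= s) by apply Rmax_l. assert (hMs : M <= s) by apply Rmax_r.
  pose proof (pos_INR d); pose proof (pos_INR (S e)); pose proof (pow_le 2 e); pose proof (pow_le s e).
  exists (2 * INR d * s + 2 * INR (S e) * 2 ^ e + 2 * INR (S e) * s ^ e + 1). split; [nra|].
  intros p hp x y hx hxy.
  assert (hpow : forall k m, (1 <= k)%nat -> (k < m)%nat -> M <= s ^ (m - k)).
  { intros k m h1 h2. apply Rle_trans with s; auto. rewrite <- pow_1 at 1. apply Rle_pow; auto; lia. }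
  assert (hxd : Cnorm x <= Cnorm x ^ d).
  { rewrite <- pow_1 at 1. apply Rle_pow; [nra | lia]. }
  assert (2 * Cnorm x <= Cnorm y); [|nra].
  apply (escape_step p s s); auto.
  - intros k hk1 hk2. eapply Rle_trans; [apply hp; unfold coef_a; lia | apply hpow; auto].
  - intros k hk1 hk2. eapply Rle_trans; [apply hp; unfold coef_b; lia | apply hpow; auto].
  - repeat split; nra.
Qed.


Fixpoint disc_path (p : nat -> C) (R0 : R) (a : C) (N : nat) : Prop :=
  match N with
  | O => Cnorm a <= R0
  | S N => Cnorm a <= R0 /\ exists y, in_corr d e p a y /\ disc_path p R0 y N
  end.

Lemma disc_path_bound p R0 a N : disc_path p R0 a N -> Cnorm a <= R0.
Proof. destruct N; simpl; tauto. Qed.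

Lemma disc_path_le p R0 a N N' : (N <= N')%nat -> disc_path p R0 a N' -> disc_path p R0 a N.
Proof.
  intros h. revert a. induction h as [|N' h IH]; auto. intros a ha. apply IH.
  clear IH h. revert a ha. induction N' as [|N' IH']; intros a [ha [y [hy hfy]]]; simpl; auto.
  split; auto. exists y; split; auto.
Qed.

Lemma disc_path_of_path p R0 x : (forall k, in_corr d e p (x k) (x (S k))) -> (forall k, Cnorm (x k) <= R0) ->
  forall N k, disc_path p R0 (x k) N.
Proof.
  intros hp hb N. induction N; intros k; simpl; auto. split; auto. exists (x (S k)); split; auto.
Qed.

Lemma disc_path_succ p R0 a : (forall N, disc_path p R0 a N) ->
  exists y, in_corr d e p a y /\ forall N, disc_path p R0 y N.
Proof.
  intros hG. destruct (peval_roots e (succ_coef p a)) as [rs hrs].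
  { apply succ_coef_lead_neq0. }
  apply NNPP. intro hno.
  assert (hall : forall r, In r rs -> exists N, ~ disc_path p R0 r N).
  { intros r hr. apply NNPP. intro hn. apply hno. exists r. split.
    - apply in_corr_iff_root; auto. apply hrs, hr.
    - intro N. apply NNPP. intro hf. apply hn. eauto. }
  destruct (list_uniform_nat (fun r N => ~ disc_path p R0 r N) rs) as [N hN]; auto.
  { intros r N N' hle hn hf. apply hn. apply disc_path_le with N'; auto. }
  destruct (hG (S N)) as [_ [y [hy hfy]]].
  apply (hN y); auto. apply hrs, in_corr_iff_root; auto.
Qed.

(* Koenig's lemma, as each point has finitely many successors. *)
Lemma path_of_disc_paths p R0 a : (forall N, disc_path p R0 a N) ->
  exists x, is_path d e p a x /\ bounded_seq x.
Proof.
  intros hG. set (G := fun z => forall N, disc_path p R0 z N).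
  set (next := fun z => epsilon (inhabits C0) (fun y => in_corr d e p z y /\ G y)).
  assert (hnext : forall z, G z -> in_corr d e p z (next z) /\ G (next z)).
  { intros z hz. apply (epsilon_spec (inhabits C0) (fun y => in_corr d e p z y /\ G y)).
    apply disc_path_succ; auto. }
  set (x := fix x (k : nat) : C := match k with O => a | S k => next (x k) end).
  assert (hx : forall k, G (x k)) by (induction k; simpl; [exact hG | apply hnext; auto]).
  exists x. split.
  - split; [reflexivity|]. intro k. apply hnext; auto.
  - exists R0. intro k. apply (disc_path_bound p R0 (x k) O), hx.
Qed.

Lemma bounded_path_in_disc p R0 x : 0 <= R0 ->
  (forall u v, R0 < Cnorm u -> in_corr d e p u v -> Cnorm u + 1 <= Cnorm v) ->
  (forall k, in_corr d e p (x k) (x (S k))) -> bounded_seq x -> forall k, Cnorm (x k) <= R0.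
Proof.
  intros hR hesc hp hb k. apply Rnot_lt_le. intro hk.
  apply (unbounded_of_escape (fun u => R0 < Cnorm u) (fun j => x (k + j)%nat)); auto.
  - intros j hj. replace (k + S j)%nat with (S (k + j)) by lia.
    pose proof (hesc _ _ hj (hp (k + j)%nat)). split; lra.
  - rewrite Nat.add_0_r; auto.
  - destruct hb as [B hB]. exists B. intros j; apply hB.
Qed.

(** * [S_{d,e}] is closed *)

Lemma fpol_uniform_cont q R0 eps : 0 <= R0 -> 0 < eps -> exists del, 0 < del /\
  forall p x x', dist_n n q p del -> Cnorm x' <= R0 -> Cnorm (Csub x x') <= del ->
    Cnorm (Csub (fpol d p x) (fpol d q x')) < eps.
Proof.
  intros hR heps. destruct (finite_bound (fun i => Cnorm (q i)) n) as [M [hM1 hM]].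
  destruct (peval_uniform_cont d R0 M eps) as [del [hdel hc]]; auto; [lra|].
  exists del; split; auto. intros p x x' hp hx' hxx. rewrite !fpol_peval by lia.
  apply hc; auto. apply fcoef_close; auto; lra. apply fcoef_bound; auto.
Qed.

Lemma gpol_uniform_cont q R0 eps : 0 <= R0 -> 0 < eps -> exists del, 0 < del /\
  forall p y y', dist_n n q p del -> Cnorm y' <= R0 -> Cnorm (Csub y y') <= del ->
    Cnorm (Csub (gpol d e p y) (gpol d e q y')) < eps.
Proof.
  intros hR heps. destruct (finite_bound (fun i => Cnorm (q i)) n) as [M [hM1 hM]].
  destruct (peval_uniform_cont e R0 M eps) as [del [hdel hc]]; auto; [lra|].
  exists del; split; auto. intros p y y' hp hy' hyy. rewrite !gpol_peval by lia.
  apply hc; auto. apply gcoef_close; auto; lra. apply gcoef_bound; auto.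
Qed.

Lemma disc_path_far_open R0 a : R0 < Cnorm a -> exists del, 0 < del /\
  forall p a' N, Cnorm (Csub a' a) < del -> ~ disc_path p R0 a' N.
Proof.
  intro ha. exists (Cnorm a - R0). split; [lra|]. intros p a' N ha' hf. apply disc_path_bound in hf.
  pose proof (Cnorm_triang_inv a a'). rewrite Cnorm_sub_comm in ha'. lra.
Qed.

(* Failing to have a bounded path of depth [N] is an open condition on [(p, a)]: the successors of
   [a] are the roots of [y |-> g(y) - f(a)], which move continuously with [(p, a)]. *)
Lemma disc_path_open q R0 : 0 <= R0 ->
  forall N a, ~ disc_path q R0 a N -> exists del, 0 < del /\
    forall p a', dist_n n q p del -> Cnorm (Csub a' a) < del -> ~ disc_path p R0 a' N.
Proof.
  intros hR. induction N as [|N IH]; intros a hna;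
    (destruct (Rle_dec (Cnorm a) R0) as [haR|haR];
     [| destruct (disc_path_far_open R0 a) as [del [hdel h]]; [lra | exists del; split; eauto]]).
  { exfalso; apply hna, haR. }
  destruct (peval_roots e (succ_coef q a)) as [rs hrs]; [apply succ_coef_lead_neq0|].
  destruct (list_uniform_pos (fun r del => forall p a', dist_n n q p del -> Cnorm (Csub a' r) < del ->
      ~ disc_path p R0 a' N) rs) as [del1 [hdel1 hroots]].
  { intros r x y hx hxy h p a' hd ha'. apply h; [apply dist_n_mono with x|]; auto; lra. }
  { intros r hr. apply IH. intro hf. apply hna. split; auto. exists r. split; auto.
    apply in_corr_iff_root; auto. apply hrs, hr. }
  assert (heps : 0 < del1 ^ e / 2) by (assert (0 < del1 ^ e) by (apply pow_lt; lra); lra).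
  destruct (gpol_uniform_cont q R0 _ hR heps) as [del2 [hdel2 hg]].
  destruct (fpol_uniform_cont q R0 _ hR heps) as [del3 [hdel3 hf]].
  set (del := Rmin del1 (Rmin del2 del3)).
  assert (h1 : del <= del1) by apply Rmin_l.
  assert (h2 : del <= del2) by (eapply Rle_trans; [apply Rmin_r | apply Rmin_l]).
  assert (h3 : del <= del3) by (eapply Rle_trans; [apply Rmin_r | apply Rmin_r]).
  exists del. split; [repeat apply Rmin_glb_lt; auto|].
  intros p a' hp ha' [ha'R [y [hy hfy]]].
  assert (hyR : Cnorm y <= R0) by (eapply disc_path_bound; eauto).
  (* [g_q(y) - f_q(a) = (f_p(a') - f_q(a)) - (g_p(y) - g_q(y))] is small, so [y] is near a successor of [a]. *)
  assert (hsmall : Cnorm (peval e (succ_coef q a) y) < Cnorm (succ_coef q a e) * del1 ^ e).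
  { rewrite succ_coef_lead, Cnorm_C1, Rmult_1_l, peval_succ_coef by lia.
    replace (Csub (gpol d e q y) (fpol d q a)) with
      (Cadd (Csub (fpol d p a') (fpol d q a)) (Csub (gpol d e q y) (gpol d e p y))) 
      by (unfold in_corr in hy; rewrite hy; generalize (gpol d e q y) (fpol d q a) (fpol d p a'); intros; Cring).
    eapply Rle_lt_trans; [apply Cnorm_triang|]. rewrite (Cnorm_sub_comm (gpol d e q y)).
    assert (Cnorm (Csub (fpol d p a') (fpol d q a)) < del1 ^ e / 2).
    { apply hf; [apply dist_n_mono with del | | ]; auto; lra. }
    assert (Cnorm (Csub (gpol d e p y) (gpol d e q y)) < del1 ^ e / 2).
    { apply hg; [apply dist_n_mono with del | | rewrite Cnorm_sub_diag]; auto; lra. }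
    lra. }
  destruct (root_near e (succ_coef q a) y del1) as [r [hr hyr]]; auto.
  { apply succ_coef_lead_neq0. }
  apply (hroots r (proj1 (hrs r) hr) p y); auto. apply dist_n_mono with del; auto.
Qed.

Lemma dfpol_root_continuity q a : dfpol d q a = C0 -> forall eps, 0 < eps ->
  exists del, 0 < del /\ forall p, dist_n n q p del -> exists a', dfpol d p a' = C0 /\ Cnorm (Csub a' a) < eps.
Proof.
  intros ha eps heps. destruct (dpoly_root_continuity d (coef_a d q) a ltac:(lia) ha eps heps) as [del [hdel h]].
  exists del. split; auto. intros p hp. apply h. intros k h1 h2.
  rewrite Cnorm_sub_comm. apply Rlt_le, hp. unfold coef_a; lia.
Qed.

Lemma dgpol_root_continuity q b : dgpol d e q b = C0 -> forall eps, 0 < eps ->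
  exists del, 0 < del /\ forall p, dist_n n q p del -> exists b', dgpol d e p b' = C0 /\ Cnorm (Csub b' b) < eps.
Proof.
  intros hb eps heps. destruct (dpoly_root_continuity e (coef_b d e q) b he hb eps heps) as [del [hdel h]].
  exists del. split; auto. intros p hp. apply h. intros k h1 h2.
  rewrite Cnorm_sub_comm. apply Rlt_le, hp. unfold coef_b; lia.
Qed.

Lemma pred_continuity q a b : in_corr d e q a b -> forall eps, 0 < eps ->
  exists del, 0 < del /\ forall p b', dist_n n q p del -> Cnorm (Csub b' b) < del ->
    exists a', in_corr d e p a' b' /\ Cnorm (Csub a' a) < eps.
Proof.
  intros hab eps heps. apply in_corr_iff_pred_root in hab.
  assert (hlead : pred_coef q b d <> C0) by (rewrite pred_coef_lead; apply C1_neq0).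
  destruct (root_continuity d (pred_coef q b) a hlead hab eps heps) as [eta [heta h]].
  destruct (gpol_uniform_cont q (Cnorm b) eta (Cnorm_ge0 b) heta) as [del1 [hdel1 hg]].
  exists (Rmin del1 eta). split; [apply Rmin_glb_lt; auto|].
  intros p b' hp hb'. assert (Rmin del1 eta <= del1) by apply Rmin_l. assert (Rmin del1 eta <= eta) by apply Rmin_r.
  destruct (h (pred_coef p b')) as [a' [ha' haa]].
  - rewrite !pred_coef_lead. reflexivity.
  - intros i hi. unfold pred_coef, set_coef0. destruct (Nat.eqb_spec i 0) as [|hi0].
    + replace (Csub (Copp (gpol d e p b')) (Copp (gpol d e q b))) with (Csub (gpol d e q b) (gpol d e p b'))
        by (generalize (gpol d e p b') (gpol d e q b); intros; Cring).
      rewrite Cnorm_sub_comm. apply Rlt_le, hg; [apply dist_n_mono with (Rmin del1 eta) | | ]; auto; lra.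
    + apply Rle_trans with (Rmin del1 eta); auto.
      apply fcoef_close; [apply Rlt_le, Rmin_glb_lt; auto | exact hp | lia].
  - exists a'. split; auto. apply in_corr_iff_pred_root; auto.
Qed.

Lemma critical_point_continuity q a : critical_point d e q a -> forall eps, 0 < eps ->
  exists del, 0 < del /\ forall p, dist_n n q p del ->
    exists a', critical_point d e p a' /\ Cnorm (Csub a' a) < eps.
Proof.
  intros [ha|[b [hb hab]]] eps heps.
  - destruct (dfpol_root_continuity q a ha eps heps) as [del [hdel h]].
    exists del. split; auto. intros p hp. destruct (h p hp) as [a' [ha' haa]]. exists a'. split; auto. left; auto.
  - destruct (pred_continuity q a b hab eps heps) as [del1 [hdel1 h1]].
    destruct (dgpol_root_continuity q b hb del1 hdel1) as [del2 [hdel2 h2]].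
    exists (Rmin del1 del2). split; [apply Rmin_glb_lt; auto|]. intros p hp.
    destruct (h2 p (dist_n_mono _ _ _ _ _ hp (Rmin_r _ _))) as [b' [hb' hbb]].
    destruct (h1 p b' (dist_n_mono _ _ _ _ _ hp (Rmin_l _ _)) hbb) as [a' [ha' haa]].
    exists a'. split; auto. right. exists b'. split; auto.
Qed.

(* A critical point [a] of [q] without bounded path already fails at some finite depth [N]
   (Koenig); both this failure and the critical point persist near [q], and escape confines bounded
   paths of nearby parameters to the disc of radius [R0]. *)
Lemma S_de_complement_open q : ~ S_de d e q ->
  exists del, 0 < del /\ forall p, dist_n n q p del -> ~ S_de d e p.
Proof.
  intro hq. apply not_all_ex_not in hq as [a ha]. apply imply_to_and in ha as [hca hna].
  destruct (finite_bound (fun i => Cnorm (q i)) n) as [M [hM1 hM]].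
  destruct (escape_radius (M + 1) ltac:(lra)) as [R0 [hR0 hesc]].
  assert (hN : exists N, ~ disc_path q R0 a N).
  { apply NNPP. intro hall. apply hna. apply (path_of_disc_paths q R0). intro N.
    apply NNPP. intro hf. apply hall. eauto. }
  destruct hN as [N hN].
  destruct (disc_path_open q R0 ltac:(lra) N a hN) as [del1 [hdel1 hopen]].
  destruct (critical_point_continuity q a hca del1 hdel1) as [del2 [hdel2 hcrit]].
  set (del := Rmin 1 (Rmin del1 del2)).
  assert (h1 : del <= 1) by apply Rmin_l.
  assert (h2 : del <= del1) by (eapply Rle_trans; [apply Rmin_r | apply Rmin_l]).
  assert (h3 : del <= del2) by (eapply Rle_trans; [apply Rmin_r | apply Rmin_r]).
  exists del. split; [repeat apply Rmin_glb_lt; lra|]. intros p hp hSp.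
  destruct (hcrit p (dist_n_mono _ _ _ _ _ hp h3)) as [a' [hca' ha']].
  destruct (hSp a' hca') as [x [[hx0 hxp] hxb]].
  assert (hxR : forall k, Cnorm (x k) <= R0).
  { apply (bounded_path_in_disc p R0 x); auto; [lra|]. apply hesc.
    intros i hi. pose proof (dist_n_bound _ _ _ _ _ hp hM i hi). lra. }
  apply (hopen p a'); auto; [apply dist_n_mono with del; auto|].
  rewrite <- hx0. apply disc_path_of_path; auto.
Qed.

(** * [S_{d,e}] is bounded *)

Lemma no_bounded_path_of_escaping_succ p s t a : 1 <= s -> 1 <= t ->
  scale_le d (coef_a d p) s -> scale_le e (coef_b d e p) t ->
  (forall y, in_corr d e p a y -> escape_zone s t (Cnorm y)) ->
  ~ exists x, is_path d e p a x /\ bounded_seq x.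
Proof.
  intros hs ht ha hb hy [x [[hx0 hxp] hxb]].
  apply (unbounded_of_escape (fun u => escape_zone s t (Cnorm u)) (fun k => x (S k))).
  - intros k hk. pose proof (escape_zone_ge1 _ _ _ hk).
    pose proof (escape_step p s t _ _ hs ht ha hb hk (hxp (S k))).
    split; [apply escape_zone_mono with (Cnorm (x (S k))) |]; auto; lra.
  - apply hy. rewrite <- hx0. apply hxp.
  - destruct hxb as [B hB]. exists B. intro k. apply hB.
Qed.

Lemma le_div_of_pow_le x A K : 0 < A -> 1 <= x -> A * x ^ d <= K * x ^ e -> x <= K / A.
Proof.
  intros hA hx h. assert (hxe : 0 < x ^ e) by (apply pow_lt; lra).
  pose proof (pow_mul_le_pow x e d hx hde).
  apply Rmult_le_reg_l with A; auto. replace (A * (K / A)) with K by (field; lra).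
  apply Rmult_le_reg_r with (x ^ e); auto. nra.
Qed.

Section CriticalValues.
Variables (A B : R).
Hypothesis hA : 0 < A.
Hypothesis hB : 0 < B.

Definition fthreshold : R := INR (S e) * (2 * INR d) ^ e / A + 2 * INR (S e) * 2 ^ e + 1.

(* A critical value of [f] much larger than [g] can account for at scale [t] pushes all successors
   into the escape zone. *)
Lemma succ_escape_of_large_fvalue p s t c : 1 <= s -> 1 <= t -> scale_le e (coef_b d e p) t ->
  A * s ^ d <= Cnorm (fpol d p c) -> INR (S e) * t ^ e < A * s ^ d -> fthreshold <= s ->
  forall y, in_corr d e p c y -> escape_zone s t (Cnorm y).
Proof.
  intros hs ht hb hfc hts hsA y hy.
  pose proof (poly_norm_upper e (coef_b d e p) t y he ht hb) as hu.
  change (poly e (coef_b d e p) y) with (gpol d e p y) in hu. rewrite hy in hu.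
  set (Y := Cnorm y) in *. assert (hY0 : 0 <= Y) by apply Cnorm_ge0.
  assert (hS : 1 <= INR (S e)) by (apply (le_INR 1); lia).
  assert (h2e : 1 <= 2 ^ e) by (apply pow_R1_Rle; lra).
  assert (hd1 : 1 <= INR d) by (apply (le_INR 1); lia).
  unfold Rmax in hu. destruct (Rle_dec Y t) as [hYt|hYt]; [lra|]. apply Rnot_le_lt in hYt.
  assert (hK : 0 <= INR (S e) * (2 * INR d) ^ e / A).
  { apply Rmult_le_pos; [apply Rmult_le_pos; [lra | apply pow_le; lra] | apply Rlt_le, Rinv_0_lt_compat; auto]. }
  assert (h1 : 2 * INR d * s <= Y).
  { apply Rnot_lt_le. intro hY.
    assert (hYe : Y ^ e <= (2 * INR d * s) ^ e) by (apply pow_incr; lra). rewrite Rpow_mult_distr in hYe.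
    assert (s <= INR (S e) * (2 * INR d) ^ e / A); [|unfold fthreshold in hsA; nra].
    apply le_div_of_pow_le; auto. eapply Rle_trans; [exact hfc|]. eapply Rle_trans; [exact hu|].
    rewrite Rmult_assoc. apply Rmult_le_compat_l; lra. }
  assert (h2 : 2 * INR (S e) * 2 ^ e < Y) by (unfold fthreshold in hsA; nra).
  split; [auto | split; auto].
  assert (hYe : t ^ e < Y ^ e) by nra.
  assert (hYd : Y ^ e * Y <= Y ^ d) by (apply pow_mul_le_pow; auto; lra).
  assert (0 < Y ^ e) by (apply pow_lt; lra).
  assert (2 * INR (S e) <= Y) by nra.
  nra.
Qed.

Definition B' : R := Rmin 1 (B / INR (S e)).
Definition gthreshold : R := 2 * INR (S e) * 2 ^ e / B' + 2 * INR (S e) / B' ^ d + 1.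

Lemma B'_pos : 0 < B'.
Proof. apply Rmin_glb_lt; [lra | apply Rdiv_lt_0_compat; auto; apply lt_0_INR; lia]. Qed.

Lemma gthreshold_gt1 : 1 < gthreshold.
Proof.
  pose proof B'_pos. pose proof (pos_INR (S e)). pose proof (pow_le 2 e ltac:(lra)).
  assert (0 < B' ^ d) by (apply pow_lt; lra).
  assert (0 <= 2 * INR (S e) * 2 ^ e / B') by (apply Rmult_le_pos; [nra | apply Rlt_le, Rinv_0_lt_compat; lra]).
  assert (0 < 2 * INR (S e) / B' ^ d)
    by (apply Rdiv_lt_0_compat; [assert (0 < INR (S e)) by (apply lt_0_INR; lia); lra | lra]).
  unfold gthreshold. lra.
Qed.

(* If [g(b) = f(a)] is a large critical value of [g], every successor [y] of [a] solves
   [g(y) = g(b)] and so has [|y| >= B' t], which is in the escape zone when [s] is small. *)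
Lemma succ_escape_of_large_gvalue p s t a b : 1 <= s -> 1 <= t -> scale_le e (coef_b d e p) t ->
  gpol d e p b = fpol d p a -> B * t ^ e <= Cnorm (gpol d e p b) ->
  gthreshold <= t -> 2 * INR d * s <= B' * t ->
  forall y, in_corr d e p a y -> escape_zone s t (Cnorm y).
Proof.
  intros hs ht hb hab hgb hTB hsB y hy.
  unfold in_corr in hy. rewrite <- hab in hy. rewrite <- hy in hgb.
  set (Y := Cnorm y) in *. assert (hY0 : 0 <= Y) by apply Cnorm_ge0.
  assert (hS : 1 <= INR (S e)) by (apply (le_INR 1); lia).
  pose proof B'_pos as hB'. assert (hB'1 : B' <= 1) by apply Rmin_l.
  assert (hB'2 : B' * INR (S e) <= B).
  { apply Rle_trans with (B / INR (S e) * INR (S e)); [apply Rmult_le_compat_r; [lra | apply Rmin_r]|].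
    right; field; lra. }
  assert (hYB : B' * t <= Y).
  { destruct (Rle_dec t Y) as [h|h]; [nra|]. apply Rnot_le_lt in h.
    pose proof (poly_norm_upper_small e (coef_b d e p) t y he ht hb (Rlt_le _ _ h)) as hu.
    change (poly e (coef_b d e p) y) with (gpol d e p y) in hu.
    assert (hte : t ^ e = t * t ^ (e - 1)) by (replace e with (S (e - 1)) at 1 by lia; reflexivity).
    assert (0 < t ^ (e - 1)) by (apply pow_lt; lra).
    assert (B * t <= INR (S e) * Y).
    { apply Rmult_le_reg_r with (t ^ (e - 1)); auto. rewrite Rmult_assoc, <- hte. fold Y in hu. nra. }
    nra. }
  assert (h2e : 1 <= 2 ^ e) by (apply pow_R1_Rle; lra).
  assert (hBd : 0 < B' ^ d) by (apply pow_lt; lra).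
  assert (hT1 : 0 <= 2 * INR (S e) * 2 ^ e / B') by (apply Rmult_le_pos; [nra | apply Rlt_le, Rinv_0_lt_compat; lra]).
  assert (hT2 : 0 <= 2 * INR (S e) / B' ^ d) by (apply Rmult_le_pos; [lra | apply Rlt_le, Rinv_0_lt_compat; lra]).
  unfold gthreshold in hTB.
  split; [lra | split].
  - assert (2 * INR (S e) * 2 ^ e < B' * t); [|lra].
    apply Rmult_lt_reg_r with (/ B'); [apply Rinv_0_lt_compat; lra|].
    replace (B' * t * / B') with t by (field; lra). unfold Rdiv in hT1, hTB. lra.
  - assert (h1' : 2 * INR (S e) < B' ^ d * t).
    { apply Rmult_lt_reg_r with (/ B' ^ d); [apply Rinv_0_lt_compat; lra|].
      replace (B' ^ d * t * / B' ^ d) with t by (field; lra). unfold Rdiv in hT2, hTB. lra. }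
    assert (hYd : (B' * t) ^ d <= Y ^ d) by (apply pow_incr; nra). rewrite Rpow_mult_distr in hYd.
    assert (htd : t ^ e * t <= t ^ d) by (apply pow_mul_le_pow; auto).
    assert (0 < t ^ e) by (apply pow_lt; lra).
    assert (B' ^ d * (t ^ e * t) <= B' ^ d * t ^ d) by (apply Rmult_le_compat_l; lra).
    nra.
Qed.

Hypothesis hfcrit : forall c s, 0 < s -> scale_le d c s ->
  (exists k, (1 <= k)%nat /\ (k < d)%nat /\ (s / 2) ^ (d - k) <= Cnorm (c k)) ->
  exists z, dpoly d c z = C0 /\ A * s ^ d <= Cnorm (poly d c z).
Hypothesis hgcrit : forall c t, 0 < t -> scale_le e c t ->
  (exists k, (1 <= k)%nat /\ (k < e)%nat /\ (t / 2) ^ (e - k) <= Cnorm (c k)) ->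
  exists z, dpoly e c z = C0 /\ B * t ^ e <= Cnorm (poly e c z).

Variables (p : nat -> C) (s t : R).
Hypothesis hSp : S_de d e p.
Hypothesis hs : tight_scale d (coef_a d p) s.
Hypothesis ht : tight_scale e (coef_b d e p) t.

Lemma gscale_not_large : gthreshold <= t -> 2 * INR d * s <= B' * t -> False.
Proof.
  intros hTB hsB. destruct hs as [hs1 [hsa _]], ht as [ht1 [htb [ht_eq1|[k [hk1 [hk2 hk3]]]]]].
  { pose proof gthreshold_gt1. lra. }
  destruct (hgcrit (coef_b d e p) t ltac:(lra) htb) as [b [hb1 hb2]]; [exists k; repeat split; auto; lra|].
  destruct (peval_has_root d (pred_coef p b)) as [a ha]; [lia | rewrite pred_coef_lead; apply C1_neq0 |].
  apply in_corr_iff_pred_root in ha.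
  assert (hcr : critical_point d e p a) by (right; exists b; split; auto).
  apply (no_bounded_path_of_escaping_succ p s t a); auto.
  apply (succ_escape_of_large_gvalue p s t a b); auto.
Qed.

Definition fbound : R :=
  fthreshold + INR (S e) * gthreshold ^ e / A + INR (S e) * (2 * INR d / B') ^ e / A + 1.

Lemma fscale_lt : s < fbound.
Proof.
  pose proof B'_pos. destruct hs as [hs1 [hsa hs_tight]], ht as [ht1 [htb _]].
  assert (hS : 1 <= INR (S e)) by (apply (le_INR 1); lia).
  assert (hpos : forall x, 0 <= x -> 0 <= INR (S e) * x ^ e / A).
  { intros x hx. apply Rmult_le_pos; [apply Rmult_le_pos; [lra | apply pow_le; lra] | apply Rlt_le, Rinv_0_lt_compat; lra]. }
  pose proof (hpos gthreshold) as hp1. pose proof (hpos (2 * INR d / B')) as hp2.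
  pose proof gthreshold_gt1.
  assert (0 <= 2 * INR d / B') by (apply Rmult_le_pos; [pose proof (pos_INR d); lra | apply Rlt_le, Rinv_0_lt_compat; lra]).
  specialize (hp1 ltac:(lra)); specialize (hp2 ltac:(lra)).
  assert (hft : 1 <= fthreshold).
  { unfold fthreshold. pose proof (pow_le 2 e).
    assert (0 <= INR (S e) * (2 * INR d) ^ e / A) by (apply hpos; pose proof (pos_INR d); lra). nra. }
  apply Rnot_le_lt. intro hsS. unfold fbound in hsS.
  destruct hs_tight as [->|[k [hk1 [hk2 hk3]]]]; [lra|].
  destruct (hfcrit (coef_a d p) s ltac:(lra) hsa) as [c [hc1 hc2]]; [exists k; repeat split; auto; lra|].
  change (poly d (coef_a d p) c) with (fpol d p c) in hc2.
  destruct (Rlt_le_dec (INR (S e) * t ^ e) (A * s ^ d)) as [hlt|hge].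
  - apply (no_bounded_path_of_escaping_succ p s t c); auto.
    + apply (succ_escape_of_large_fvalue p s t c); auto; lra.
    + apply hSp. left; auto.
  - destruct (Rlt_le_dec t gthreshold) as [htT|htT].
    + assert (s <= INR (S e) * gthreshold ^ e / A); [|lra].
      apply le_div_of_pow_le; auto. eapply Rle_trans; [exact hge|].
      assert (t ^ e <= gthreshold ^ e) by (apply pow_incr; lra).
      assert (1 <= s ^ e) by (apply pow_R1_Rle; lra).
      assert (0 <= gthreshold ^ e) by (apply pow_le; lra).
      apply Rle_trans with (INR (S e) * gthreshold ^ e); [apply Rmult_le_compat_l; lra|].
      rewrite <- (Rmult_1_r (INR (S e) * gthreshold ^ e)) at 1. apply Rmult_le_compat_l; nra.
    + destruct (Rlt_le_dec (B' * t) (2 * INR d * s)) as [hst|hst]; [|exact (gscale_not_large htT hst)].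
      assert (s <= INR (S e) * (2 * INR d / B') ^ e / A); [|lra].
      apply le_div_of_pow_le; auto. eapply Rle_trans; [exact hge|].
      assert (t <= 2 * INR d / B' * s).
      { apply Rmult_le_reg_l with B'; auto. replace (B' * (2 * INR d / B' * s)) with (2 * INR d * s) by (field; lra). lra. }
      assert (hte : t ^ e <= (2 * INR d / B' * s) ^ e) by (apply pow_incr; lra).
      rewrite Rpow_mult_distr in hte. rewrite Rmult_assoc. apply Rmult_le_compat_l; lra.
Qed.

Definition gbound : R := gthreshold + 2 * INR d * fbound / B' + 1.

Lemma gscale_lt : t < gbound.
Proof.
  pose proof B'_pos. pose proof fscale_lt. pose proof gthreshold_gt1. destruct hs as [hs1 _].
  apply Rnot_le_lt. intro htT. unfold gbound in htT.
  assert (0 <= 2 * INR d * fbound / B')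
    by (apply Rmult_le_pos; [pose proof (pos_INR d); nra | apply Rlt_le, Rinv_0_lt_compat; lra]).
  apply gscale_not_large; [lra|].
  apply Rle_trans with (2 * INR d * fbound); [pose proof (pos_INR d); nra|].
  apply Rle_trans with (B' * (2 * INR d * fbound / B')); [right; field; lra|].
  apply Rmult_le_compat_l; lra.
Qed.

End CriticalValues.

Lemma coords_le_of_scales p s t : 1 <= s -> 1 <= t ->
  scale_le d (coef_a d p) s -> scale_le e (coef_b d e p) t ->
  forall i, (i < n)%nat -> Cnorm (p i) <= s ^ d + t ^ e.
Proof.
  intros hs ht hsa htb i hi.
  assert (0 <= s ^ d) by (apply pow_le; lra). assert (0 <= t ^ e) by (apply pow_le; lra).
  destruct (le_lt_dec (d - 1) i) as [hi'|hi'].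
  - set (k := (e - 1 - (i - (d - 1)))%nat).
    replace (p i) with (coef_b d e p k) by (unfold coef_b, k; f_equal; lia).
    eapply Rle_trans; [apply htb; unfold k; lia|].
    apply Rle_trans with (t ^ e); [apply Rle_pow; auto; lia | lra].
  - set (k := (d - 1 - i)%nat).
    replace (p i) with (coef_a d p k) by (unfold coef_a, k; f_equal; lia).
    eapply Rle_trans; [apply hsa; unfold k; lia|].
    apply Rle_trans with (s ^ d); [apply Rle_pow; auto; lia | lra].
Qed.

Lemma S_de_bounded : exists M, forall p, S_de d e p -> forall i, (i < n)%nat -> Cnorm (p i) <= M.
Proof.
  destruct (large_critical_value d ltac:(lia)) as [A [hA hfcrit]].
  destruct (large_critical_value e he) as [B [hB hgcrit]].
  exists (fbound A B ^ d + gbound A B ^ e). intros p hSp i hi.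
  destruct (tight_scale_exists d (coef_a d p)) as [s hs].
  destruct (tight_scale_exists e (coef_b d e p)) as [t ht].
  pose proof (fscale_lt A B hA hB hfcrit hgcrit p s t hSp hs ht) as hsS.
  pose proof (gscale_lt A B hA hB hfcrit hgcrit p s t hSp hs ht) as htT.
  destruct hs as [hs1 [hsa _]], ht as [ht1 [htb _]].
  eapply Rle_trans; [apply (coords_le_of_scales p s t); auto|].
  apply Rplus_le_compat; apply pow_incr; lra.
Qed.

End Correspondence.

Theorem theorem1p5 (d e : nat) (he : (1 <= e)%nat) (hde : (e < d)%nat) :
  compact_n (d + e - 2) (S_de d e).
Proof.
  apply HeineBorel.compact_n_of_bounded_closed.
  - exact (S_de_bounded d e he hde).
  - exact (S_de_complement_open d e he hde).
Qed.
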